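(* Consider the impulsive system $\dot S=S(A-S)-\beta_0 IS$, $\dot I=\beta_0 IS-(\sigma+g)I$ for $t\neq nT$, $S(nT)=(1-p)S(nT^-)$, $I(nT)=I(nT^-)$, $n\in\mathbb{N}$. For $T>0$: (1) the disease-free trivial solution $(0,0)$ is locally asymptotically stable provided $p>p_1(T)$; (2) the disease-free periodic solution $(\mathcal{S},0)$ is locally asymptotically stable provided $p_2(T)<p<p_1(T)$, where $p_1(T)=1-e^{-AT}$ and $p_2(T)=1-e^{-(A-S_c)T}$.
   Context: Parameters: $A\in(0,1]$, $\beta_0>0$, $\sigma,g\ge0$ with $\sigma+g>0$, $p\in[0,1]$; $S_c=(\sigma+g)/\beta_0$; it is assumed $S(t)\le A$. $\mathcal{S}$ is the $T$-periodic function given for $nT\le t<(n+1)T$ by $\mathcal{S}(t)=\frac{A[e^{AT}(1-p)-1]}{e^{AT}(1-p)-1+pe^{A(T-(t-nT))}}$. Local asymptotic stability of a $T$-periodic solution through $x_0$: for every neighbourhood $V$ of $x_0$ there is a neighbourhood $W\subset V$ with $\varphi(kT,y_0)\in V$ for all $y_0\in W$, $k\in\mathbb{N}$, and there is a neighbourhood $V$ with $\varphi(kT,y_0)\to x_0$ for all $y_0\in V$. *)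

From Stdlib Require Import Reals.
From Coquelicot Require Import Coquelicot.
Open Scope R_scope.

Definition inD (A : R) (y : R * R) : Prop :=
  0 <= fst y <= A /\ 0 <= snd y.

(* (S, I) is a solution on [0, +oo) of the impulsive system
     S' = S (A - S) - b0 I S,  I' = b0 I S - (sigma+g) I   for t <> nT,
     S(nT) = (1-p) S(nT^-),    I(nT) = I(nT^-),            n >= 1,
   with initial (post-impulse) state (S(0), I(0)) = y0.  Solutions are
   right-continuous at the impulse times, differentiable in between, and
   have left limits at the impulse times. *)
Definition is_sol (A b0 sigma g p T : R) (y0 : R * R) (S I : R -> R) : Prop :=
  S 0 = fst y0 /\ I 0 = snd y0 /\
  forall n : nat,
    let a := INR n * T in
    (forall t, a < t < a + T ->
       is_derive S t (S t * (A - S t) - b0 * I t * S t) /\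
       is_derive I t (b0 * I t * S t - (sigma + g) * I t)) /\
    filterlim S (at_right a) (locally (S a)) /\
    filterlim I (at_right a) (locally (I a)) /\
    (exists lS, filterlim S (at_left (a + T)) (locally lS) /\ S (a + T) = (1 - p) * lS) /\
    (exists lI, filterlim I (at_left (a + T)) (locally lI) /\ I (a + T) = lI).

(* Local asymptotic stability of the T-periodic solution through x0, in terms
   of the stroboscopic values phi(kT, y0) = (S(kT), I(kT)) of solutions starting
   at y0 (in the state space). *)
Definition LAS (A b0 sigma g p T : R) (x0 : R * R) : Prop :=
  (forall V : R * R -> Prop, locally x0 V ->
     exists W : R * R -> Prop, locally x0 W /\ (forall y, W y -> V y) /\
       forall y0 S I, inD A y0 -> W y0 -> is_sol A b0 sigma g p T y0 S I ->
         forall k : nat, V (S (INR k * T), I (INR k * T))) /\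
  (exists V : R * R -> Prop, locally x0 V /\
     forall y0 S I, inD A y0 -> V y0 -> is_sol A b0 sigma g p T y0 S I ->
       filterlim (fun k : nat => (S (INR k * T), I (INR k * T))) eventually (locally x0)).

Definition Sc (b0 sigma g : R) : R := (sigma + g) / b0.
Definition p1 (A T : R) : R := 1 - exp (- (A * T)).
Definition p2 (A b0 sigma g T : R) : R := 1 - exp (- ((A - Sc b0 sigma g) * T)).

Definition Scal (A p T : R) (t : R) : R :=
  let n := IZR (Int_part (t / T)) in
  A * (exp (A * T) * (1 - p) - 1) /
  (exp (A * T) * (1 - p) - 1 + p * exp (A * (T - (t - n * T)))).

(* Existence: clamping S and I outside an a priori box makes the vector field globally
   Lipschitz and bounded, so Picard iteration yields a solution on each period; sign
   preservation and Gronwall bounds keep this solution inside the box, so it solves the true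
   system, and the solutions on successive periods are glued at the pulses.

   Stability of both disease-free solutions follows from exponential contraction of the
   stroboscopic map n |-> (S(nT), I(nT)).  Near (0, 0), S' <= A S and the pulse give
   S((n+1)T) <= (1-p) e^{AT} S(nT), a contraction when p > p1(T); once S is small, I decays
   like e^{-(sigma+g)T/2}.  Near the periodic solution, w = 1/S satisfies
   ((w - 1/A) e^{At})' = b0 I w e^{At} >= 0, so over one period w undergoes an affine map of
   slope e^{-AT}/(1-p) < 1 (as p < p1(T)) up to an error proportional to I; and since
   (I S^b0 e^{-(b0 A - sigma - g) t})' <= 0, the quantity I S^b0 contracts by the factor
   (1-p)^b0 e^{(b0 A - sigma - g) T}, which is < 1 exactly when p > p2(T). *)

From Stdlib Require Import Reals Lra Psatz ZArith Classical.
From Coquelicot Require Import Coquelicot.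
Open Scope R_scope.

Section FilterlimR.
Context {T : Type} {F : (T -> Prop) -> Prop} {FF : Filter F}.

Lemma lim_plus (f g : T -> R) a b :
  filterlim f F (locally a) -> filterlim g F (locally b) ->
  filterlim (fun x => f x + g x) F (locally (a + b)).
Proof. intros Hf Hg. exact (filterlim_comp_2 _ _ _ Hf Hg (filterlim_plus a b)). Qed.

Lemma lim_mult (f g : T -> R) a b :
  filterlim f F (locally a) -> filterlim g F (locally b) ->
  filterlim (fun x => f x * g x) F (locally (a * b)).
Proof. intros Hf Hg. exact (filterlim_comp_2 _ _ _ Hf Hg (filterlim_mult a b)). Qed.

Lemma lim_continuous (f : T -> R) (h : R -> R) a :
  filterlim f F (locally a) -> continuous h a -> filterlim (fun x => h (f x)) F (locally (h a)).
Proof. intros Hf Hh. eapply filterlim_comp; [exact Hf|exact Hh]. Qed.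

Lemma lim_opp (f : T -> R) a :
  filterlim f F (locally a) -> filterlim (fun x => - f x) F (locally (- a)).
Proof. intros H. apply (lim_continuous f Ropp a H), (continuous_opp (fun x : R => x)), continuous_id. Qed.

Lemma lim_minus (f g : T -> R) a b :
  filterlim f F (locally a) -> filterlim g F (locally b) ->
  filterlim (fun x => f x - g x) F (locally (a - b)).
Proof. intros Hf Hg. exact (lim_plus f _ a _ Hf (lim_opp g b Hg)). Qed.

Lemma lim_exp (f : T -> R) a :
  filterlim f F (locally a) -> filterlim (fun x => exp (f x)) F (locally (exp a)).
Proof. intros Hf. exact (lim_continuous f exp a Hf (continuous_exp a)). Qed.

Lemma lim_ln (f : T -> R) a :
  filterlim f F (locally a) -> 0 < a -> filterlim (fun x => ln (f x)) F (locally (ln a)).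
Proof. intros Hf Ha. exact (lim_continuous f ln a Hf (continuous_ln a Ha)). Qed.

Lemma lim_inv (f : T -> R) a :
  filterlim f F (locally a) -> a <> 0 -> filterlim (fun x => / f x) F (locally (/ a)).
Proof. intros Hf Ha. exact (lim_continuous f Rinv a Hf (continuous_Rinv a Ha)). Qed.

End FilterlimR.

Lemma lim_id_right a : filterlim (fun x : R => x) (at_right a) (locally a).
Proof. intros P [e He]. exists e. intros y Hy _. exact (He y Hy). Qed.

Lemma lim_id_left a : filterlim (fun x : R => x) (at_left a) (locally a).
Proof. intros P [e He]. exists e. intros y Hy _. exact (He y Hy). Qed.

Lemma continuous_lim_right (f : R -> R) a :
  continuous f a -> filterlim f (at_right a) (locally (f a)).
Proof. intros H. exact (lim_continuous _ f a (lim_id_right a) H). Qed.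

Lemma continuous_lim_left (f : R -> R) a :
  continuous f a -> filterlim f (at_left a) (locally (f a)).
Proof. intros H. exact (lim_continuous _ f a (lim_id_left a) H). Qed.

Ltac lim_auto :=
  repeat match goal with
  | |- filterlim (fun _ => ?c) _ _ => apply filterlim_const
  | |- filterlim (fun x => x) (at_right _) _ => apply lim_id_right
  | |- filterlim (fun x => x) (at_left _) _ => apply lim_id_left
  | |- filterlim (fun _ => _ - _) _ _ => apply lim_minus
  | |- filterlim (Rminus _) _ _ => apply lim_minus
  | |- filterlim (fun _ => _ + _) _ _ => apply lim_plus
  | |- filterlim (Rplus _) _ _ => apply lim_plus
  | |- filterlim (fun _ => _ * _) _ _ => apply lim_mult
  | |- filterlim (Rmult _) _ _ => apply lim_mult
  | |- filterlim (fun _ => - _) _ _ => apply lim_opp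
  | |- filterlim (fun _ => exp _) _ _ => apply lim_exp
  | |- filterlim (fun _ => / _) _ _ => apply lim_inv
  | |- filterlim (fun _ => ln _) _ _ => apply lim_ln
  | H : filterlim ?f ?F ?G |- filterlim ?f ?F ?G => exact H
  | H : continuous ?f ?x |- filterlim ?f (locally ?x) _ => exact H
  | |- continuous ?f ?x => change (filterlim f (locally x) (locally (f x))); cbv beta
  end.

Lemma at_right_interval a b : a < b -> at_right a (fun x => a < x < b).
Proof.
  intros Hab. exists (mkposreal (b - a) ltac:(lra)). intros y Hy Hay.
  apply Rabs_lt_between' in Hy. simpl in Hy. lra.
Qed.

Lemma at_left_interval a b : a < b -> at_left b (fun x => a < x < b).
Proof.
  intros Hab. exists (mkposreal (b - a) ltac:(lra)). intros y Hy Hyb.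
  apply Rabs_lt_between' in Hy. simpl in Hy. lra.
Qed.

Lemma lim_le {X : Type} {G : (X -> Prop) -> Prop} {FG : ProperFilter' G} (f g : X -> R) lf lg :
  G (fun x => f x <= g x) -> filterlim f G (locally lf) -> filterlim g G (locally lg) -> lf <= lg.
Proof. intros H Hf Hg. exact (filterlim_le f g lf lg H Hf Hg). Qed.

Lemma lim_left_ge (f : R -> R) a b C L :
  a < b -> (forall s, a < s < b -> C <= f s) -> filterlim f (at_left b) (locally L) -> C <= L.
Proof.
  intros Hab H Hl.
  exact (lim_le (fun _ => C) f C L (filter_imp _ _ H (at_left_interval a b Hab)) (filterlim_const C) Hl).
Qed.

Lemma lim_right_pos (f : R -> R) t L :
  filterlim f (at_right t) (locally L) -> 0 < L -> exists d, 0 < d /\ forall s, t < s < t + d -> 0 < f s.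
Proof.
  intros Hl HL. destruct (Hl (fun y => 0 < y)) as [d Hd].
  { exists (mkposreal L HL). intros y Hy. apply Rabs_lt_between' in Hy. simpl in Hy. lra. }
  exists d. split; [apply cond_pos|]. intros s Hs. apply Hd; [|lra].
  apply Rabs_lt_between'. lra.
Qed.

Lemma exp_le x y : x <= y -> exp x <= exp y.
Proof. intros [Hlt|Heq]; [left; apply exp_increasing, Hlt|rewrite Heq; lra]. Qed.

Lemma one_le_exp x : 0 <= x -> 1 <= exp x.
Proof. intros Hx. rewrite <- exp_0. apply exp_le, Hx. Qed.

Lemma is_derive_continuous (f : R -> R) x l : is_derive f x l -> continuous f x.
Proof. intros H. apply (ex_derive_continuous (K := R_AbsRing) (V := R_NormedModule)). exists l. exact H. Qed.

Lemma is_derive_eq (f : R -> R) (x l l' : R) : is_derive f x l -> l = l' -> is_derive f x l'.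
Proof. intros H <-. exact H. Qed.

Lemma is_derive_Rmult (f g : R -> R) x df dg : is_derive f x df -> is_derive g x dg ->
  is_derive (fun s => f s * g s) x (df * g x + f x * dg).
Proof. intros Hf Hg. apply (is_derive_mult f g x df dg Hf Hg). intros; apply Rmult_comm. Qed.

Lemma is_derive_Rexp (f : R -> R) x df : is_derive f x df ->
  is_derive (fun s => exp (f s)) x (exp (f x) * df).
Proof.
  intros H. eapply is_derive_eq; [exact (is_derive_comp exp f x _ df (is_derive_exp (f x)) H)|].
  simpl. unfold scal; simpl; unfold mult; simpl. ring.
Qed.

Lemma is_derive_Rln (f : R -> R) x df : is_derive f x df -> 0 < f x ->
  is_derive (fun s => ln (f s)) x (df / f x).
Proof.
  intros H Hp. eapply is_derive_eq; [exact (is_derive_comp ln f x _ df (is_derive_ln (f x) Hp) H)|].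
  simpl. unfold scal; simpl; unfold mult; simpl. unfold Rdiv. ring.
Qed.

Lemma is_derive_Rinv (f : R -> R) x df : is_derive f x df -> f x <> 0 ->
  is_derive (fun s => / f s) x (- df / (f x * f x)).
Proof. intros H Hp. eapply is_derive_eq; [exact (is_derive_inv f x df H Hp)|]. simpl. field. exact Hp. Qed.

Lemma is_derive_explin c x : is_derive (fun s => exp (c * s)) x (c * exp (c * x)).
Proof. auto_derive; [exact I|ring]. Qed.

Lemma mvt_lower_bound (f df : R -> R) a b m L1 L2 : a < b ->
  (forall x, a < x < b -> is_derive f x (df x)) -> (forall x, a < x < b -> m <= df x) ->
  filterlim f (at_right a) (locally L1) -> filterlim f (at_left b) (locally L2) ->
  L1 + m * (b - a) <= L2.
Proof.
  intros Hab Hd Hm H1 H2.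
  assert (Hxy : forall x y, a < x -> x < y -> y < b -> f x + m * (y - x) <= f y).
  { intros x y Hx Hxy Hy.
    destruct (MVT_gen f x y df) as [c [Hc Heq]];
      rewrite ?Rmin_left, ?Rmax_right in * by lra.
    - intros z Hz. apply Hd. lra.
    - intros z Hz. apply continuity_pt_filterlim, (is_derive_continuous f z (df z)), Hd. lra.
    - assert (m <= df c) by (apply Hm; lra). nra. }
  assert (Hy : forall y, a < y < b -> L1 + m * (y - a) <= f y).
  { intros y Hy. apply (lim_le (G := at_right a) (fun x => f x + m * (y - x)) (fun _ => f y)).
    - apply (filter_imp (fun x => a < x < y)); [intros x Hx; apply Hxy; lra|].
      apply at_right_interval. lra.
    - lim_auto.
    - apply filterlim_const. }
  apply (lim_le (G := at_left b) (fun y => L1 + m * (y - a)) f); [|lim_auto|exact H2].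
  exact (filter_imp _ _ Hy (at_left_interval a b Hab)).
Qed.

Lemma mvt_upper_bound (f df : R -> R) a b M L1 L2 : a < b ->
  (forall x, a < x < b -> is_derive f x (df x)) -> (forall x, a < x < b -> df x <= M) ->
  filterlim f (at_right a) (locally L1) -> filterlim f (at_left b) (locally L2) ->
  L2 <= L1 + M * (b - a).
Proof.
  intros Hab Hd HM H1 H2.
  enough (- L1 + - M * (b - a) <= - L2) by lra.
  apply (mvt_lower_bound (fun x => - f x) (fun x => - df x) a b); auto using lim_opp.
  - intros x Hx. exact (is_derive_opp f x (df x) (Hd x Hx)).
  - intros x Hx. specialize (HM x Hx). lra.
Qed.

Lemma gronwall_le (f df : R -> R) c a b L1 L2 : a < b ->
  (forall x, a < x < b -> is_derive f x (df x)) -> (forall x, a < x < b -> df x <= c * f x) ->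
  filterlim f (at_right a) (locally L1) -> filterlim f (at_left b) (locally L2) ->
  L2 <= L1 * exp (c * (b - a)).
Proof.
  intros Hab Hd Hc H1 H2.
  assert (H : L2 * exp (- c * b) <= L1 * exp (- c * a) + 0 * (b - a)).
  { apply (mvt_upper_bound (fun u => f u * exp (- c * u))
             (fun u => (df u - c * f u) * exp (- c * u)) a b); [exact Hab| | | lim_auto | lim_auto].
    - intros x Hx. eapply is_derive_eq.
      + apply is_derive_Rmult; [apply Hd, Hx|apply is_derive_explin].
      + cbv beta. ring.
    - intros x Hx. specialize (Hc x Hx). pose proof (exp_pos (- c * x)). nra. }
  pose proof (exp_pos (c * b)) as Hb.
  replace L2 with (L2 * exp (- c * b) * exp (c * b))
    by (rewrite Rmult_assoc, <- exp_plus; replace (- c * b + c * b) with 0 by ring; rewrite exp_0; ring).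
  replace (L1 * exp (c * (b - a))) with (L1 * exp (- c * a) * exp (c * b))
    by (rewrite Rmult_assoc, <- exp_plus; f_equal; f_equal; ring).
  apply Rmult_le_compat_r; lra.
Qed.

Lemma gronwall_ge (f df : R -> R) c a b L1 L2 : a < b ->
  (forall x, a < x < b -> is_derive f x (df x)) -> (forall x, a < x < b -> c * f x <= df x) ->
  filterlim f (at_right a) (locally L1) -> filterlim f (at_left b) (locally L2) ->
  L1 * exp (c * (b - a)) <= L2.
Proof.
  intros Hab Hd Hc H1 H2.
  enough (- L2 <= - L1 * exp (c * (b - a))) by lra.
  apply (gronwall_le (fun x => - f x) (fun x => - df x)); auto using lim_opp.
  - intros x Hx. exact (is_derive_opp f x (df x) (Hd x Hx)).
  - intros x Hx. specialize (Hc x Hx). lra.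
Qed.

(** * Sign preservation *)

Lemma real_induction (a b : R) (Q : R -> Prop) : a < b ->
  (forall t, a <= t < b -> (forall s, a <= s < t -> Q s) -> Q t) ->
  (forall t, a <= t < b -> Q t -> exists d, 0 < d /\ forall s, t < s < t + d -> Q s) ->
  forall t, a <= t < b -> Q t.
Proof.
  intros Hab Hclosed Hopen t Ht. apply NNPP. intros HQt.
  set (E := fun x => a <= x <= t /\ forall s, a <= s < x -> Q s).
  destruct (completeness E) as [m [Hub Hlub]].
  { exists t. intros x [Hx _]. lra. }
  { exists a. split; [lra|]. intros; lra. }
  assert (Ham : a <= m) by (apply Hub; split; [lra|]; intros; lra).
  assert (Hmt : m <= t) by (apply Hlub; intros x [Hx _]; lra).
  assert (Hbelow : forall s, a <= s < m -> Q s).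
  { intros s Hs. apply NNPP. intros HQs.
    enough (m <= s) by lra. apply Hlub. intros x [Hx Hx2].
    destruct (Rle_or_lt x s) as [h|h]; auto. exfalso. apply HQs, Hx2. lra. }
  assert (HQm : Q m) by (apply Hclosed; auto; lra).
  destruct (Req_dec m t) as [->|Hne]; [contradiction|].
  destruct (Hopen m ltac:(lra) HQm) as [d [Hd Hs]].
  set (x := Rmin (m + d / 2) t).
  assert (Hx : m < x <= m + d / 2 /\ x <= t)
    by (unfold x; repeat split; [apply Rmin_glb_lt|apply Rmin_l|apply Rmin_r]; lra).
  enough (x <= m) by lra.
  apply Hub. split; [lra|]. intros s Hs'.
  destruct (Rtotal_order s m) as [h|[->|h]]; [apply Hbelow; lra|exact HQm|apply Hs; lra].
Qed.

Lemma Rmult_abs_bound x y M : Rabs y <= M * Rabs x -> - (M * (x * x)) <= x * y <= M * (x * x).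
Proof.
  intros H. apply Rabs_le_between in H. unfold Rabs in H.
  destruct (Rcase_abs x); split; nra.
Qed.

Section SignPreservation.
Variables (f df : R -> R) (a b : R).
Hypothesis Hab : a < b.
Hypothesis Hd : forall t, a < t < b -> is_derive f t (df t).
Hypothesis Hr : filterlim f (at_right a) (locally (f a)).
Hypothesis Hloc : forall t, a <= t < b -> exists d M, 0 < d /\
  forall s, t - d < s < t + d -> a < s < b -> Rabs (df s) <= M * Rabs (f s).

Lemma lim_right_at t : a <= t < b -> filterlim f (at_right t) (locally (f t)).
Proof.
  intros Ht. destruct (Req_dec t a) as [->|h]; [exact Hr|].
  apply continuous_lim_right. apply (is_derive_continuous f t (df t)), Hd. lra.
Qed.

Lemma lim_left_at t : a < t < b -> filterlim f (at_left t) (locally (f t)).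
Proof. intros Ht. apply continuous_lim_left. apply (is_derive_continuous f t (df t)), Hd, Ht. Qed.

(* Near a zero of [f], [f^2 exp(-+2Mu)] is monotone, hence vanishes on both sides. *)
Lemma zero_spreads t : a <= t < b -> f t = 0 ->
  exists d, 0 < d /\ forall s, t - d < s < t + d -> a < s < b -> f s = 0.
Proof.
  intros Ht H0. destruct (Hloc t Ht) as [d [M [Hd0 HM]]].
  exists d. split; [exact Hd0|]. intros s Hs Hsab.
  set (K := Rabs M).
  assert (HG : forall c u, a < u < b -> is_derive (fun v => f v * f v * exp (c * v)) u
                 ((2 * (f u * df u) + c * (f u * f u)) * exp (c * u))).
  { intros c u Hu. eapply is_derive_eq.
    - apply is_derive_Rmult; [apply is_derive_Rmult; apply Hd, Hu|apply is_derive_explin].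
    - cbv beta. ring. }
  assert (HGc : forall c u, a < u < b -> continuous (fun v => f v * f v * exp (c * v)) u)
    by (intros c u Hu; eapply is_derive_continuous, HG, Hu).
  assert (Hbound : forall u, s < u < t \/ t < u < s -> - (K * (f u * f u)) <= f u * df u <= K * (f u * f u)).
  { intros u Hu. apply Rmult_abs_bound. eapply Rle_trans; [apply HM; lra|].
    apply Rmult_le_compat_r; [apply Rabs_pos|apply RRle_abs]. }
  clearbody K.
  enough (Hsq : f s * f s * exp (2 * K * s) <= f t * f t * exp (2 * K * t) \/
                f s * f s * exp (- 2 * K * s) <= f t * f t * exp (- 2 * K * t)).
  { rewrite H0, !Rmult_0_l in Hsq.
    pose proof (exp_pos (2 * K * s)). pose proof (exp_pos (- 2 * K * s)).
    assert (f s * f s <= 0) by (destruct Hsq; nra). nra. }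
  destruct (Rtotal_order s t) as [Hst|[->|Hts]]; [left|left; lra|right].
  - enough (f s * f s * exp (2 * K * s) + 0 * (t - s) <= f t * f t * exp (2 * K * t)) by lra.
    apply (mvt_lower_bound _ _ s t 0 _ _ Hst (fun u Hu => HG (2 * K) u ltac:(lra))).
    + intros u Hu. specialize (Hbound u (or_introl Hu)). pose proof (exp_pos (2 * K * u)). nra.
    + exact (continuous_lim_right _ s (HGc (2 * K) s ltac:(lra))).
    + exact (continuous_lim_left _ t (HGc (2 * K) t ltac:(lra))).
  - enough (f s * f s * exp (- 2 * K * s) <= f t * f t * exp (- 2 * K * t) + 0 * (s - t)) by lra.
    apply (mvt_upper_bound _ _ t s 0 _ _ Hts (fun u Hu => HG (- 2 * K) u ltac:(lra))).
    + intros u Hu. specialize (Hbound u (or_intror Hu)). pose proof (exp_pos (- 2 * K * u)). nra.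
    + lim_auto; apply lim_right_at; lra.
    + exact (continuous_lim_left _ s (HGc (- 2 * K) s ltac:(lra))).
Qed.

Lemma sign_nonneg : 0 <= f a -> forall t, a <= t < b -> 0 <= f t.
Proof.
  intros H0. apply (real_induction a b _ Hab).
  - intros t Ht Hbelow. destruct (Req_dec t a) as [->|Hta]; [exact H0|].
    apply (lim_left_ge f a t 0 (f t)); [lra| |apply lim_left_at; lra].
    intros s Hs. apply Hbelow. lra.
  - intros t Ht [Hpos|Hzero].
    + destruct (lim_right_pos f t (f t) (lim_right_at t Ht) Hpos) as [d [Hd0 Hs]].
      exists d. split; [exact Hd0|]. intros s Hs'. left. apply Hs, Hs'.
    + destruct (zero_spreads t Ht (eq_sym Hzero)) as [d [Hd0 Hs]].
      exists (Rmin d (b - t)). split; [apply Rmin_pos; lra|]. intros s Hs'.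
      assert (Rmin d (b - t) <= d /\ Rmin d (b - t) <= b - t) as [] by (split; [apply Rmin_l|apply Rmin_r]).
      right. symmetry. apply Hs; lra.
Qed.

Lemma sign_pos : 0 < f a -> forall t, a <= t < b -> 0 < f t.
Proof.
  intros H0. apply (real_induction a b _ Hab).
  - intros t Ht Hbelow. destruct (Req_dec t a) as [->|Hta]; [exact H0|].
    assert (Hge : 0 <= f t).
    { apply (lim_left_ge f a t 0 (f t)); [lra| |apply lim_left_at; lra].
      intros s Hs. left. apply Hbelow. lra. }
    destruct Hge as [Hpos|Hzero]; [exact Hpos|exfalso].
    destruct (zero_spreads t Ht (eq_sym Hzero)) as [d [Hd0 Hs]].
    set (s := Rmax a (t - d / 2) / 2 + t / 2).
    assert (a < s < t /\ t - d < s) as [Hs1 Hs2].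
    { unfold s. destruct (Rle_lt_dec a (t - d / 2)); [rewrite Rmax_right|rewrite Rmax_left]; lra. }
    assert (Hfs : 0 < f s) by (apply Hbelow; lra).
    rewrite (Hs s) in Hfs by lra. lra.
  - intros t Ht Hpos. exact (lim_right_pos f t (f t) (lim_right_at t Ht) Hpos).
Qed.

End SignPreservation.

(** * Picard iteration *)

Definition clamp (M x : R) : R := Rmax 0 (Rmin x M).

Lemma clamp_range M x : 0 <= M -> 0 <= clamp M x <= M.
Proof. intros. unfold clamp, Rmax, Rmin. repeat destruct Rle_dec; lra. Qed.

Lemma clamp_id M x : 0 <= x <= M -> clamp M x = x.
Proof. intros. unfold clamp, Rmax, Rmin. repeat destruct Rle_dec; lra. Qed.

Lemma clamp_le M x : 0 <= M -> 0 <= x -> clamp M x <= x.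
Proof. intros. unfold clamp, Rmax, Rmin. repeat destruct Rle_dec; lra. Qed.

Lemma clamp_lipschitz M x y : 0 <= M -> Rabs (clamp M x - clamp M y) <= Rabs (x - y).
Proof.
  intros. apply Rabs_le. pose proof (Rle_abs (x - y)). pose proof (Rle_abs (- (x - y))).
  rewrite Rabs_Ropp in *. unfold clamp, Rmax, Rmin. repeat destruct Rle_dec; lra.
Qed.

Lemma clamp_abs M x : 0 <= M -> Rabs (clamp M x) <= Rabs x.
Proof.
  intros HM. replace (clamp M x) with (clamp M x - clamp M 0)
    by (rewrite (clamp_id M 0) by lra; ring).
  rewrite <- (Rminus_0_r x) at 2. apply clamp_lipschitz, HM.
Qed.

Lemma lipschitz_continuous (g : R -> R) K :
  (forall t s, Rabs (g t - g s) <= K * Rabs (t - s)) -> forall t, continuous g t.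
Proof.
  intros H t. apply filterlim_locally. intros eps.
  assert (HK : 0 < Rabs K + 1) by (pose proof (Rabs_pos K); lra).
  exists (mkposreal (eps / (Rabs K + 1)) (Rdiv_lt_0_compat _ _ (cond_pos eps) HK)).
  intros s Hs. change (Rabs (s - t) < eps / (Rabs K + 1)) in Hs. change (Rabs (g s - g t) < eps).
  eapply Rle_lt_trans; [apply H|].
  apply (Rle_lt_trans _ ((Rabs K + 1) * Rabs (s - t))).
  - pose proof (RRle_abs K). pose proof (Rabs_pos (s - t)). nra.
  - apply (Rmult_lt_compat_l (Rabs K + 1)) in Hs; [|exact HK].
    replace ((Rabs K + 1) * (eps / (Rabs K + 1))) with (pos eps) in Hs by (field; lra). exact Hs.
Qed.

Lemma ex_RInt_cont (g : R -> R) u v : (forall t, continuous g t) -> ex_RInt g u v.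
Proof. intros H. apply (ex_RInt_continuous (V := R_CompleteNormedModule)). intros; apply H. Qed.

Lemma RInt_abs_le_const (g : R -> R) M u v : (forall t, continuous g t) ->
  (forall s, Rabs (g s) <= M) -> Rabs (RInt g u v) <= M * Rabs (v - u).
Proof.
  intros Hc Hb. rewrite Rmult_comm.
  exact (norm_RInt_le_const_abs g u v _ M (fun x _ => Hb x) (RInt_correct g u v (ex_RInt_cont g u v Hc))).
Qed.

Lemma RInt_scal_exp C c u : c <> 0 ->
  RInt (fun s => C * exp (c * s)) 0 u = C / c * (exp (c * u) - 1).
Proof.
  intros Hc. apply is_RInt_unique.
  replace (C / c * (exp (c * u) - 1)) with (minus (C / c * exp (c * u)) (C / c * exp (c * 0)))
    by (rewrite Rmult_0_r, exp_0; unfold minus, plus, opp; simpl; ring).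
  apply (is_RInt_derive (fun s => C / c * exp (c * s))).
  - intros x _. auto_derive; [exact I|field; exact Hc].
  - intros x _. apply (ex_derive_continuous (K := R_AbsRing) (V := R_NormedModule)). auto_derive. exact I.
Qed.

Lemma lim_half_pow : is_lim_seq (fun n => (1 / 2) ^ n) 0.
Proof. apply is_lim_seq_geom. rewrite Rabs_right; lra. Qed.

Lemma le_of_le_geometric x y C : (forall n, x <= y + C * (1 / 2) ^ n) -> x <= y.
Proof.
  intros H. replace y with (y + C * 0) by ring.
  apply (lim_le (G := eventually) (fun _ => x) (fun n => y + C * (1 / 2) ^ n)).
  - exists O. intros n _. apply H.
  - apply filterlim_const.
  - apply lim_plus; [apply filterlim_const|]. apply lim_mult; [apply filterlim_const|exact lim_half_pow].
Qed.

Lemma geometric_cauchy_limit (u : nat -> R) K :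
  (forall n, Rabs (u (S n) - u n) <= K * (1 / 2) ^ n) ->
  is_lim_seq u (real (Lim_seq u)) /\ forall n, Rabs (real (Lim_seq u) - u n) <= 2 * K * (1 / 2) ^ n.
Proof.
  intros H.
  assert (Htail : forall n j, Rabs (u (n + j)%nat - u n) <= 2 * K * (1 / 2) ^ n * (1 - (1 / 2) ^ j)).
  { intros n j. induction j as [|j IH].
    - rewrite Nat.add_0_r, Rminus_diag, Rabs_R0. simpl. lra.
    - replace (n + S j)%nat with (S (n + j)) by lia.
      specialize (H (n + j)%nat). rewrite pow_add in H.
      replace (u (S (n + j)) - u n) with ((u (S (n + j)) - u (n + j)%nat) + (u (n + j)%nat - u n)) by ring.
      eapply Rle_trans; [apply Rabs_triang|]. simpl. lra. }
  assert (HK : 0 <= K) by (specialize (H O); pose proof (Rabs_pos (u 1%nat - u O)); simpl in H; lra).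
  assert (Hnm : forall n m, (n <= m)%nat -> Rabs (u m - u n) <= 2 * K * (1 / 2) ^ n).
  { intros n m Hnm. replace m with (n + (m - n))%nat by lia.
    eapply Rle_trans; [apply Htail|]. pose proof (pow_lt (1 / 2) (m - n) ltac:(lra)).
    pose proof (pow_lt (1 / 2) n ltac:(lra)). assert (0 <= K * (1 / 2) ^ n) by nra. nra. }
  assert (Hcv : is_lim_seq u (real (Lim_seq u))).
  { apply Lim_seq_correct', ex_lim_seq_cauchy_corr. intros eps.
    destruct (pow_lt_1_zero (1 / 2) ltac:(rewrite Rabs_right; lra) (eps / (4 * K + 1))) as [N HN].
    { apply Rdiv_lt_0_compat; [apply cond_pos|lra]. }
    exists N. intros n m Hn Hm. specialize (HN N (le_n N)).
    rewrite Rabs_right in HN by (apply Rle_ge, pow_le; lra).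
    pose proof (Hnm N n Hn). pose proof (Hnm N m Hm). pose proof (cond_pos eps).
    pose proof (pow_lt (1 / 2) N ltac:(lra)).
    apply (Rmult_lt_compat_l (4 * K + 1)) in HN; [|lra].
    replace ((4 * K + 1) * (eps / (4 * K + 1))) with (pos eps) in HN by (field; lra).
    replace (u n - u m) with ((u n - u N) - (u m - u N)) by ring.
    eapply Rle_lt_trans; [apply Rabs_triang|]. rewrite Rabs_Ropp. nra. }
  split; [exact Hcv|]. intros n.
  apply (lim_le (G := eventually) (fun m => Rabs (u m - u n)) (fun _ => 2 * K * (1 / 2) ^ n)).
  - exists n. apply Hnm.
  - apply (lim_continuous _ Rabs), continuous_Rabs. apply lim_minus; [exact Hcv|apply filterlim_const].
  - apply filterlim_const.
Qed.

Lemma lipschitz_of_approx (u : nat -> R -> R) (U : R -> R) B C :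
  (forall n t s, Rabs (u n t - u n s) <= B * Rabs (t - s)) ->
  (forall n t, Rabs (U t - u n t) <= C * (1 / 2) ^ n) ->
  forall t s, Rabs (U t - U s) <= B * Rabs (t - s).
Proof.
  intros Hu HU t s. apply (le_of_le_geometric _ _ (2 * C)). intros n.
  replace (U t - U s) with ((U t - u n t) + (u n t - u n s) - (U s - u n s)) by ring.
  eapply Rle_trans; [apply Rabs_triang|]. rewrite Rabs_Ropp.
  eapply Rle_trans; [apply Rplus_le_compat_r, Rabs_triang|].
  pose proof (HU n t). pose proof (HU n s). pose proof (Hu n t s). lra.
Qed.

Section Picard.
Variables (f1 f2 : R -> R -> R) (L B H x0 y0 : R).
Hypotheses (HL : 0 < L) (HH : 0 < H).
Hypothesis f1_lipschitz : forall x y x' y', Rabs (f1 x y - f1 x' y') <= L * (Rabs (x - x') + Rabs (y - y')).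
Hypothesis f2_lipschitz : forall x y x' y', Rabs (f2 x y - f2 x' y') <= L * (Rabs (x - x') + Rabs (y - y')).
Hypothesis f1_bounded : forall x y, Rabs (f1 x y) <= B.
Hypothesis f2_bounded : forall x y, Rabs (f2 x y) <= B.

(* Clamping time to [0, H] makes every iterate globally Lipschitz and constant outside [0, H]. *)
Fixpoint picard (n : nat) : (R -> R) * (R -> R) :=
  match n with
  | O => (fun _ => x0, fun _ => y0)
  | S m =>
      (fun t => x0 + RInt (fun s => f1 (fst (picard m) s) (snd (picard m) s)) 0 (clamp H t),
       fun t => y0 + RInt (fun s => f2 (fst (picard m) s) (snd (picard m) s)) 0 (clamp H t))
  end.

Local Notation X n := (fst (picard n)).
Local Notation Y n := (snd (picard n)).

Lemma B_nonneg : 0 <= B.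
Proof. pose proof (f1_bounded 0 0). pose proof (Rabs_pos (f1 0 0)). lra. Qed.

Lemma comp_lipschitz (f : R -> R -> R) (U V : R -> R) :
  (forall x y x' y', Rabs (f x y - f x' y') <= L * (Rabs (x - x') + Rabs (y - y'))) ->
  (forall t s, Rabs (U t - U s) <= B * Rabs (t - s)) ->
  (forall t s, Rabs (V t - V s) <= B * Rabs (t - s)) ->
  forall t s, Rabs (f (U t) (V t) - f (U s) (V s)) <= 2 * L * B * Rabs (t - s).
Proof.
  intros Hf HU HV t s. eapply Rle_trans; [apply Hf|].
  pose proof (HU t s). pose proof (HV t s). nra.
Qed.

Lemma integral_lipschitz (g : R -> R) c : (forall t, continuous g t) -> (forall s, Rabs (g s) <= B) ->
  forall t s, Rabs ((c + RInt g 0 (clamp H t)) - (c + RInt g 0 (clamp H s))) <= B * Rabs (t - s).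
Proof.
  intros Hc Hb t s.
  replace ((c + RInt g 0 (clamp H t)) - (c + RInt g 0 (clamp H s))) with (RInt g (clamp H s) (clamp H t)).
  - eapply Rle_trans; [apply (RInt_abs_le_const g B _ _ Hc Hb)|].
    apply Rmult_le_compat_l; [exact B_nonneg|]. apply clamp_lipschitz. lra.
  - pose proof (RInt_Chasles g 0 (clamp H s) (clamp H t) (ex_RInt_cont _ _ _ Hc) (ex_RInt_cont _ _ _ Hc)) as E.
    change (RInt g 0 (clamp H s) + RInt g (clamp H s) (clamp H t) = RInt g 0 (clamp H t)) in E. lra.
Qed.

Lemma picard_lipschitz n :
  (forall t s, Rabs (X n t - X n s) <= B * Rabs (t - s)) /\
  (forall t s, Rabs (Y n t - Y n s) <= B * Rabs (t - s)).
Proof.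
  induction n as [|n [IHX IHY]].
  - split; intros t s; simpl; rewrite Rminus_diag, Rabs_R0;
      pose proof B_nonneg; pose proof (Rabs_pos (t - s)); nra.
  - split; apply integral_lipschitz; auto;
      apply (lipschitz_continuous _ (2 * L * B)), comp_lipschitz; auto.
Qed.

Lemma picard_field_continuous (f : R -> R -> R) n t :
  (forall x y x' y', Rabs (f x y - f x' y') <= L * (Rabs (x - x') + Rabs (y - y'))) ->
  continuous (fun s => f (X n s) (Y n s)) t.
Proof.
  intros Hf. destruct (picard_lipschitz n).
  apply (lipschitz_continuous _ (2 * L * B)), comp_lipschitz; auto.
Qed.

Lemma picard_x_S m t : X (S m) t = x0 + RInt (fun s => f1 (X m s) (Y m s)) 0 (clamp H t).
Proof. reflexivity. Qed.

Lemma picard_y_S m t : Y (S m) t = y0 + RInt (fun s => f2 (X m s) (Y m s)) 0 (clamp H t).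
Proof. reflexivity. Qed.

Definition picard_gap n t := Rabs (X (S n) t - X n t) + Rabs (Y (S n) t - Y n t).

(* The weight [exp (4 L t)] makes each Picard step a contraction by 1/2. *)
Lemma picard_step_bound (g1 g2 : R -> R) c n t K0 :
  (forall s, continuous g1 s) -> (forall s, continuous g2 s) ->
  (forall s, 0 <= s <= H -> Rabs (g1 s - g2 s) <= L * (K0 * (1 / 2) ^ n * exp (4 * L * s))) ->
  0 <= K0 ->
  Rabs ((c + RInt g1 0 (clamp H t)) - (c + RInt g2 0 (clamp H t)))
    <= K0 * (1 / 2) ^ n * exp (4 * L * clamp H t) / 4.
Proof.
  intros H1 H2 Hb HK0. set (u := clamp H t).
  assert (Hu : 0 <= u <= H) by (apply clamp_range; lra).
  assert (Hc : forall s, continuous (fun s => g1 s - g2 s) s)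
    by (intros s; exact (lim_minus _ _ _ _ (H1 s) (H2 s))).
  replace ((c + RInt g1 0 u) - (c + RInt g2 0 u)) with (RInt (fun s => g1 s - g2 s) 0 u).
  2:{ pose proof (RInt_minus g1 g2 0 u (ex_RInt_cont _ _ _ H1) (ex_RInt_cont _ _ _ H2)) as E.
      change (RInt (fun s => g1 s - g2 s) 0 u = RInt g1 0 u - RInt g2 0 u) in E. lra. }
  eapply Rle_trans; [apply abs_RInt_le; [lra|apply ex_RInt_cont, Hc]|].
  eapply Rle_trans; [apply (RInt_le _ (fun s => L * (K0 * (1 / 2) ^ n) * exp (4 * L * s))); [lra| | |]|].
  - apply ex_RInt_cont. intros s. apply continuous_Rabs_comp, Hc.
  - apply ex_RInt_cont. intros s. apply (ex_derive_continuous (K := R_AbsRing) (V := R_NormedModule)).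
    auto_derive. exact I.
  - intros s Hs. rewrite Rmult_assoc. apply Hb. lra.
  - rewrite RInt_scal_exp by lra. pose proof (pow_lt (1 / 2) n ltac:(lra)).
    pose proof (exp_pos (4 * L * u)).
    replace (L * (K0 * (1 / 2) ^ n) / (4 * L)) with (K0 * (1 / 2) ^ n / 4) by (field; lra).
    assert (0 <= K0 * (1 / 2) ^ n) by nra. unfold Rdiv. nra.
Qed.

Lemma picard_gap_bound n t : picard_gap n t <= 2 * B * H * (1 / 2) ^ n * exp (4 * L * clamp H t).
Proof.
  pose proof B_nonneg as HB. assert (HK0 : 0 <= 2 * B * H) by nra.
  revert t. induction n as [|n IH]; intros t.
  - assert (Hu : 0 <= clamp H t <= H) by (apply clamp_range; lra).
    assert (1 <= exp (4 * L * clamp H t)) by (rewrite <- exp_0; apply exp_le; nra).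
    change (Rabs (x0 + RInt (fun _ => f1 x0 y0) 0 (clamp H t) - x0)
          + Rabs (y0 + RInt (fun _ => f2 x0 y0) 0 (clamp H t) - y0) <= 2 * B * H * 1 * exp (4 * L * clamp H t)).
    rewrite !Rplus_minus_l.
    pose proof (RInt_abs_le_const (fun _ => f1 x0 y0) B 0 (clamp H t)
                  (fun _ => continuous_const _ _) (fun _ => f1_bounded _ _)).
    pose proof (RInt_abs_le_const (fun _ => f2 x0 y0) B 0 (clamp H t)
                  (fun _ => continuous_const _ _) (fun _ => f2_bounded _ _)).
    rewrite Rminus_0_r, (Rabs_right (clamp H t)) in H1, H2 by lra.
    assert (B * clamp H t <= B * H) by (apply Rmult_le_compat_l; lra).
    assert (2 * B * H * 1 <= 2 * B * H * exp (4 * L * clamp H t)) by (apply Rmult_le_compat_l; lra).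
    lra.
  - assert (Hb : forall (f : R -> R -> R),
              (forall x y x' y', Rabs (f x y - f x' y') <= L * (Rabs (x - x') + Rabs (y - y'))) ->
              forall s, 0 <= s <= H ->
              Rabs (f (X (S n) s) (Y (S n) s) - f (X n s) (Y n s))
                <= L * (2 * B * H * (1 / 2) ^ n * exp (4 * L * s))).
    { intros f Hf s Hs. eapply Rle_trans; [apply Hf|].
      apply Rmult_le_compat_l; [lra|]. pose proof (IH s) as Hg. rewrite clamp_id in Hg by exact Hs.
      exact Hg. }
    unfold picard_gap. rewrite (picard_x_S (S n)), (picard_x_S n), (picard_y_S (S n)), (picard_y_S n).
    eapply Rle_trans; [apply Rplus_le_compat|].
    + exact (picard_step_bound _ _ x0 n t _ (fun s => picard_field_continuous f1 (S n) s f1_lipschitz)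
               (fun s => picard_field_continuous f1 n s f1_lipschitz) (Hb f1 f1_lipschitz) HK0).
    + exact (picard_step_bound _ _ y0 n t _ (fun s => picard_field_continuous f2 (S n) s f2_lipschitz)
               (fun s => picard_field_continuous f2 n s f2_lipschitz) (Hb f2 f2_lipschitz) HK0).
    + pose proof (pow_lt (1 / 2) n ltac:(lra)). pose proof (exp_pos (4 * L * clamp H t)).
      simpl pow. nra.
Qed.

Definition picard_const := 2 * B * H * exp (4 * L * H).

Lemma picard_gap_uniform n t : picard_gap n t <= picard_const * (1 / 2) ^ n.
Proof.
  eapply Rle_trans; [apply picard_gap_bound|]. unfold picard_const.
  pose proof B_nonneg. pose proof (pow_lt (1 / 2) n ltac:(lra)).
  assert (exp (4 * L * clamp H t) <= exp (4 * L * H))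
    by (apply exp_le; pose proof (clamp_range H t ltac:(lra)); nra).
  assert (0 <= 2 * B * H * (1 / 2) ^ n) by (apply Rmult_le_pos; nra).
  replace (2 * B * H * exp (4 * L * H) * (1 / 2) ^ n) with (2 * B * H * (1 / 2) ^ n * exp (4 * L * H)) by ring.
  apply Rmult_le_compat_l; assumption.
Qed.

Definition picard_x t := real (Lim_seq (fun n => X n t)).
Definition picard_y t := real (Lim_seq (fun n => Y n t)).

Lemma picard_x_approx n t : Rabs (picard_x t - X n t) <= 2 * picard_const * (1 / 2) ^ n.
Proof.
  apply (geometric_cauchy_limit (fun n => X n t)). intros m.
  eapply Rle_trans; [|apply (picard_gap_uniform m t)].
  unfold picard_gap. pose proof (Rabs_pos (Y (S m) t - Y m t)). lra.
Qed.

Lemma picard_y_approx n t : Rabs (picard_y t - Y n t) <= 2 * picard_const * (1 / 2) ^ n.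
Proof.
  apply (geometric_cauchy_limit (fun n => Y n t)). intros m.
  eapply Rle_trans; [|apply (picard_gap_uniform m t)].
  unfold picard_gap. pose proof (Rabs_pos (X (S m) t - X m t)). lra.
Qed.

Lemma picard_x_lipschitz t s : Rabs (picard_x t - picard_x s) <= B * Rabs (t - s).
Proof.
  exact (lipschitz_of_approx (fun n => X n) _ B _ (fun n => proj1 (picard_lipschitz n)) picard_x_approx t s).
Qed.

Lemma picard_y_lipschitz t s : Rabs (picard_y t - picard_y s) <= B * Rabs (t - s).
Proof.
  exact (lipschitz_of_approx (fun n => Y n) _ B _ (fun n => proj2 (picard_lipschitz n)) picard_y_approx t s).
Qed.

Lemma picard_limit_field_continuous (f : R -> R -> R) t :
  (forall x y x' y', Rabs (f x y - f x' y') <= L * (Rabs (x - x') + Rabs (y - y'))) ->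
  continuous (fun s => f (picard_x s) (picard_y s)) t.
Proof.
  intros Hf. apply (lipschitz_continuous _ (2 * L * B)), comp_lipschitz;
    auto using picard_x_lipschitz, picard_y_lipschitz.
Qed.

Lemma picard_field_approx (f : R -> R -> R) n s :
  (forall x y x' y', Rabs (f x y - f x' y') <= L * (Rabs (x - x') + Rabs (y - y'))) ->
  Rabs (f (X n s) (Y n s) - f (picard_x s) (picard_y s)) <= 4 * L * picard_const * (1 / 2) ^ n.
Proof.
  intros Hf. eapply Rle_trans; [apply Hf|].
  pose proof (picard_x_approx n s). pose proof (picard_y_approx n s).
  rewrite (Rabs_minus_sym (X n s)), (Rabs_minus_sym (Y n s)).
  replace (4 * L * picard_const * (1 / 2) ^ n)
    with (L * (2 * picard_const * (1 / 2) ^ n + 2 * picard_const * (1 / 2) ^ n)) by ring.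
  apply Rmult_le_compat_l; lra.
Qed.

Lemma integral_equation_of_approx (u g : nat -> R -> R) (U G : R -> R) c C :
  (forall n s, continuous (g n) s) -> (forall s, continuous G s) ->
  (forall n t, u (S n) t = c + RInt (g n) 0 (clamp H t)) ->
  (forall n s, Rabs (g n s - G s) <= C * (1 / 2) ^ n) ->
  (forall n t, Rabs (U t - u n t) <= C * (1 / 2) ^ n) ->
  forall t, U t = c + RInt G 0 (clamp H t).
Proof.
  intros Hg HG Hu HgG HU t.
  assert (HC : 0 <= C) by (pose proof (HU O t); pose proof (Rabs_pos (U t - u O t)); simpl in *; lra).
  assert (Hclamp : 0 <= clamp H t <= H) by (apply clamp_range; lra).
  enough (Rabs (U t - (c + RInt G 0 (clamp H t))) <= 0)
    by (pose proof (Rabs_pos (U t - (c + RInt G 0 (clamp H t)))); apply Rminus_diag_uniq, Rabs_eq_0; lra).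
  apply (le_of_le_geometric _ _ (C * (1 + H))). intros n.
  assert (Hint : Rabs (RInt (fun s => g n s - G s) 0 (clamp H t)) <= C * (1 / 2) ^ n * H).
  { eapply Rle_trans; [apply RInt_abs_le_const; [|apply HgG]|].
    - intros s. exact (lim_minus _ _ _ _ (Hg n s) (HG s)).
    - pose proof (pow_lt (1 / 2) n ltac:(lra)). rewrite Rminus_0_r, Rabs_right by lra.
      apply Rmult_le_compat_l; [nra|lra]. }
  pose proof (RInt_minus (g n) G 0 (clamp H t) (ex_RInt_cont _ _ _ (Hg n)) (ex_RInt_cont _ _ _ HG)) as E.
  change (RInt (fun s => g n s - G s) 0 (clamp H t) = RInt (g n) 0 (clamp H t) - RInt G 0 (clamp H t)) in E.
  rewrite E in Hint. pose proof (HU (S n) t) as HUn. rewrite Hu in HUn. simpl pow in HUn.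
  replace (U t - (c + RInt G 0 (clamp H t)))
    with ((U t - (c + RInt (g n) 0 (clamp H t))) + (RInt (g n) 0 (clamp H t) - RInt G 0 (clamp H t))) by ring.
  eapply Rle_trans; [apply Rabs_triang|]. pose proof (pow_lt (1 / 2) n ltac:(lra)). nra.
Qed.

Lemma is_derive_clamped_integral (G U : R -> R) c t :
  (forall s, continuous G s) -> (forall v, U v = c + RInt G 0 (clamp H v)) -> 0 < t < H ->
  is_derive U t (G t).
Proof.
  intros HG HU Ht.
  apply (is_derive_ext_loc (fun v => c + RInt G 0 v)).
  - exists (mkposreal (Rmin t (H - t)) (Rmin_pos t (H - t) ltac:(lra) ltac:(lra))).
    intros y Hy. apply Rabs_lt_between' in Hy. simpl in Hy.
    pose proof (Rmin_l t (H - t)). pose proof (Rmin_r t (H - t)).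
    rewrite HU, clamp_id by lra. reflexivity.
  - assert (D : is_derive (fun v => RInt G 0 v) t (G t)).
    { apply (is_derive_RInt (V := R_CompleteNormedModule) G (fun v => RInt G 0 v) 0 t); [|apply HG].
      exists (mkposreal 1 Rlt_0_1). intros y _.
      apply (RInt_correct (V := R_CompleteNormedModule)), ex_RInt_cont, HG. }
    eapply is_derive_eq; [exact (is_derive_plus (fun _ => c) _ t 0 (G t) (is_derive_const c t) D)|].
    change (0 + G t = G t). ring.
Qed.

Lemma picard_const_nonneg : 0 <= picard_const.
Proof. unfold picard_const. pose proof B_nonneg. pose proof (exp_pos (4 * L * H)). apply Rmult_le_pos; nra. Qed.

Lemma picard_component_integral (f : R -> R -> R) (u : nat -> R -> R) (U : R -> R) c :
  (forall x y x' y', Rabs (f x y - f x' y') <= L * (Rabs (x - x') + Rabs (y - y'))) ->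
  (forall n t, u (S n) t = c + RInt (fun s => f (X n s) (Y n s)) 0 (clamp H t)) ->
  (forall n t, Rabs (U t - u n t) <= 2 * picard_const * (1 / 2) ^ n) ->
  forall t, U t = c + RInt (fun s => f (picard_x s) (picard_y s)) 0 (clamp H t).
Proof.
  intros Hf Hu HU.
  pose proof picard_const_nonneg. set (C := 4 * L * picard_const + 2 * picard_const).
  assert (HC : forall n, 0 <= (1 / 2) ^ n) by (intros; apply pow_le; lra).
  apply (integral_equation_of_approx u (fun n s => f (X n s) (Y n s)) _ _ _ C).
  - intros n s. apply picard_field_continuous, Hf.
  - intros s. apply picard_limit_field_continuous, Hf.
  - exact Hu.
  - intros n s. eapply Rle_trans; [apply picard_field_approx, Hf|].
    apply Rmult_le_compat_r; [apply HC|unfold C; lra].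
  - intros n t. eapply Rle_trans; [apply HU|].
    apply Rmult_le_compat_r; [apply HC|unfold C; nra].
Qed.

Theorem picard_solution :
  picard_x 0 = x0 /\ picard_y 0 = y0 /\
  (forall t, continuous picard_x t) /\ (forall t, continuous picard_y t) /\
  forall t, 0 < t < H ->
    is_derive picard_x t (f1 (picard_x t) (picard_y t)) /\
    is_derive picard_y t (f2 (picard_x t) (picard_y t)).
Proof.
  pose proof (picard_component_integral f1 (fun n => X n) picard_x x0 f1_lipschitz
                (fun n t => eq_refl) picard_x_approx) as Hx.
  pose proof (picard_component_integral f2 (fun n => Y n) picard_y y0 f2_lipschitz
                (fun n t => eq_refl) picard_y_approx) as Hy.
  split; [|split; [|split; [|split]]].
  - rewrite Hx, clamp_id, RInt_point by lra. apply Rplus_0_r.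
  - rewrite Hy, clamp_id, RInt_point by lra. apply Rplus_0_r.
  - apply (lipschitz_continuous _ B), picard_x_lipschitz.
  - apply (lipschitz_continuous _ B), picard_y_lipschitz.
  - intros t Ht. split.
    + apply (is_derive_clamped_integral (fun s => f1 (picard_x s) (picard_y s)) picard_x x0); [|exact Hx|lra].
      intros s. apply picard_limit_field_continuous, f1_lipschitz.
    + apply (is_derive_clamped_integral (fun s => f2 (picard_x s) (picard_y s)) picard_y y0); [|exact Hy|lra].
      intros s. apply picard_limit_field_continuous, f2_lipschitz.
Qed.

End Picard.

(** * Existence of solutions of the impulsive system *)

Lemma Rabs_mult_sub a b a' b' Ma Mb :
  Rabs a' <= Ma -> Rabs b <= Mb -> Rabs (a * b - a' * b') <= Mb * Rabs (a - a') + Ma * Rabs (b - b').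
Proof.
  intros Ha Hb. replace (a * b - a' * b') with ((a - a') * b + a' * (b - b')) by ring.
  eapply Rle_trans; [apply Rabs_triang|]. rewrite !Rabs_mult.
  pose proof (Rabs_pos (a - a')). pose proof (Rabs_pos (b - b')). pose proof (Rabs_pos b).
  pose proof (Rabs_pos a'). nra.
Qed.

Section TruncatedField.
Variables (A b0 k Ls Ms : R).
Hypotheses (HA : 0 < A) (Hb0 : 0 < b0) (Hk : 0 < k) (HLs : 0 < Ls) (HMs : 0 < Ms).

(* Clamping S and I makes the vector field globally Lipschitz and bounded, as Picard iteration needs. *)
Definition trunc_S x y := clamp Ls x * (A - clamp Ls x - b0 * clamp Ms y).
Definition trunc_I x y := clamp Ms y * (b0 * clamp Ls x - k).
Definition trunc_lip := A + k + 2 * Ls + b0 * (Ls + Ms).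
Definition trunc_bound := Ls * (A + Ls + b0 * Ms) + Ms * (b0 * Ls + k).

Lemma clamp_bounds x y :
  0 <= clamp Ls x <= Ls /\ 0 <= clamp Ms y <= Ms /\
  Rabs (clamp Ls x) <= Ls /\ Rabs (clamp Ms y) <= Ms.
Proof.
  pose proof (clamp_range Ls x ltac:(lra)). pose proof (clamp_range Ms y ltac:(lra)).
  repeat split; try lra; apply Rabs_le; lra.
Qed.

Lemma trunc_S_factor_bound x y : Rabs (A - clamp Ls x - b0 * clamp Ms y) <= A + Ls + b0 * Ms.
Proof. destruct (clamp_bounds x y) as [? [? _]]. apply Rabs_le. nra. Qed.

Lemma trunc_I_factor_bound x : Rabs (b0 * clamp Ls x - k) <= b0 * Ls + k.
Proof. destruct (clamp_bounds x 0) as [? _]. apply Rabs_le. nra. Qed.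

Lemma trunc_S_lipschitz x y x' y' :
  Rabs (trunc_S x y - trunc_S x' y') <= trunc_lip * (Rabs (x - x') + Rabs (y - y')).
Proof.
  unfold trunc_S. destruct (clamp_bounds x' y') as [_ [_ [Hx' _]]].
  eapply Rle_trans; [apply (Rabs_mult_sub _ _ _ _ _ _ Hx' (trunc_S_factor_bound x y))|].
  replace (A - clamp Ls x - b0 * clamp Ms y - (A - clamp Ls x' - b0 * clamp Ms y'))
    with (- (clamp Ls x - clamp Ls x') + - b0 * (clamp Ms y - clamp Ms y')) by ring.
  pose proof (Rabs_triang (- (clamp Ls x - clamp Ls x')) (- b0 * (clamp Ms y - clamp Ms y'))) as Htri.
  rewrite Rabs_Ropp, Rabs_mult, Rabs_Ropp, (Rabs_right b0) in Htri by lra.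
  pose proof (clamp_lipschitz Ls x x' ltac:(lra)). pose proof (clamp_lipschitz Ms y y' ltac:(lra)).
  pose proof (Rabs_pos (clamp Ls x - clamp Ls x')). pose proof (Rabs_pos (clamp Ms y - clamp Ms y')).
  assert (Ls * Rabs (- (clamp Ls x - clamp Ls x') + - b0 * (clamp Ms y - clamp Ms y'))
          <= Ls * (Rabs (clamp Ls x - clamp Ls x') + b0 * Rabs (clamp Ms y - clamp Ms y')))
    by (apply Rmult_le_compat_l; lra).
  pose proof (Rabs_pos (x - x')). pose proof (Rabs_pos (y - y')).
  assert (0 <= b0 * Ls /\ 0 <= b0 * Ms) as [] by (split; nra). unfold trunc_lip. nra.
Qed.

Lemma trunc_I_lipschitz x y x' y' :
  Rabs (trunc_I x y - trunc_I x' y') <= trunc_lip * (Rabs (x - x') + Rabs (y - y')).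
Proof.
  unfold trunc_I. destruct (clamp_bounds x' y') as [_ [_ [_ Hy']]].
  eapply Rle_trans; [apply (Rabs_mult_sub _ _ _ _ _ _ Hy' (trunc_I_factor_bound x))|].
  replace (b0 * clamp Ls x - k - (b0 * clamp Ls x' - k)) with (b0 * (clamp Ls x - clamp Ls x')) by ring.
  rewrite Rabs_mult, (Rabs_right b0) by lra.
  pose proof (clamp_lipschitz Ls x x' ltac:(lra)). pose proof (clamp_lipschitz Ms y y' ltac:(lra)).
  pose proof (Rabs_pos (clamp Ls x - clamp Ls x')). pose proof (Rabs_pos (clamp Ms y - clamp Ms y')).
  pose proof (Rabs_pos (x - x')). pose proof (Rabs_pos (y - y')).
  assert (0 <= b0 * Ls /\ 0 <= b0 * Ms) as [] by (split; nra).
  assert ((b0 * Ls + k) * Rabs (clamp Ms y - clamp Ms y') <= (b0 * Ls + k) * Rabs (y - y'))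
    by (apply Rmult_le_compat_l; lra).
  assert (Ms * (b0 * Rabs (clamp Ls x - clamp Ls x')) <= (b0 * Ms) * Rabs (x - x'))
    by (rewrite <- Rmult_assoc, (Rmult_comm Ms b0); apply Rmult_le_compat_l; lra).
  unfold trunc_lip. nra.
Qed.

Lemma trunc_S_bounded x y : Rabs (trunc_S x y) <= trunc_bound.
Proof.
  unfold trunc_S, trunc_bound. destruct (clamp_bounds x y) as [_ [_ [Hx _]]].
  rewrite Rabs_mult. assert (0 <= Ms * (b0 * Ls + k)) by (apply Rmult_le_pos; nra).
  enough (Rabs (clamp Ls x) * Rabs (A - clamp Ls x - b0 * clamp Ms y) <= Ls * (A + Ls + b0 * Ms)) by lra.
  apply Rmult_le_compat; auto using Rabs_pos, trunc_S_factor_bound.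
Qed.

Lemma trunc_I_bounded x y : Rabs (trunc_I x y) <= trunc_bound.
Proof.
  unfold trunc_I, trunc_bound. destruct (clamp_bounds x y) as [_ [_ [_ Hy]]].
  rewrite Rabs_mult. assert (0 <= Ls * (A + Ls + b0 * Ms)) by (apply Rmult_le_pos; nra).
  enough (Rabs (clamp Ms y) * Rabs (b0 * clamp Ls x - k) <= Ms * (b0 * Ls + k)) by lra.
  apply Rmult_le_compat; auto using Rabs_pos, trunc_I_factor_bound.
Qed.

Lemma trunc_S_linear x y : Rabs (trunc_S x y) <= (A + Ls + b0 * Ms) * Rabs x.
Proof.
  unfold trunc_S. rewrite Rabs_mult, Rmult_comm.
  apply Rmult_le_compat; auto using Rabs_pos, trunc_S_factor_bound, clamp_abs, Rlt_le.
Qed.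

Lemma trunc_I_linear x y : Rabs (trunc_I x y) <= (b0 * Ls + k) * Rabs y.
Proof.
  unfold trunc_I. rewrite Rabs_mult, Rmult_comm.
  apply Rmult_le_compat; auto using Rabs_pos, trunc_I_factor_bound, clamp_abs, Rlt_le.
Qed.

Lemma trunc_S_growth x y : 0 <= x -> trunc_S x y <= A * x.
Proof.
  intros Hx. unfold trunc_S. destruct (clamp_bounds x y) as [? [? _]].
  pose proof (clamp_le Ls x ltac:(lra) Hx).
  assert (0 <= clamp Ls x * (b0 * clamp Ms y)) by (apply Rmult_le_pos; nra). nra.
Qed.

Lemma trunc_I_growth x y : 0 <= y -> trunc_I x y <= b0 * Ls * y.
Proof.
  intros Hy. unfold trunc_I. destruct (clamp_bounds x y) as [? [? _]].
  pose proof (clamp_le Ms y ltac:(lra) Hy).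
  assert (clamp Ms y * (b0 * clamp Ls x) <= y * (b0 * Ls)) by (apply Rmult_le_compat; nra). nra.
Qed.

End TruncatedField.

Section OnePeriod.
Variables (A b0 k T x0 y0 : R).
Hypotheses (HA : 0 < A) (Hb0 : 0 < b0) (Hk : 0 < k) (HT : 0 < T) (Hx0 : 0 <= x0) (Hy0 : 0 <= y0).

(* A priori bounds on [0, 2T), below which the truncation is inactive; [0, 2T) is used so that
   the closed period [0, T] lies inside the open interval where the equations hold. *)
Definition S_cap := x0 * exp (2 * A * T) + 1.
Definition I_cap := y0 * exp (b0 * S_cap * (2 * T)) + 1.

Definition period_S := picard_x (trunc_S A b0 S_cap I_cap) (trunc_I b0 k S_cap I_cap) (2 * T) x0 y0.
Definition period_I := picard_y (trunc_S A b0 S_cap I_cap) (trunc_I b0 k S_cap I_cap) (2 * T) x0 y0.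

Lemma S_cap_pos : 0 < S_cap.
Proof. unfold S_cap. pose proof (exp_pos (2 * A * T)). nra. Qed.

Lemma I_cap_pos : 0 < I_cap.
Proof. unfold I_cap. pose proof (exp_pos (b0 * S_cap * (2 * T))). nra. Qed.

Lemma period_truncated :
  period_S 0 = x0 /\ period_I 0 = y0 /\
  (forall t, continuous period_S t) /\ (forall t, continuous period_I t) /\
  forall t, 0 < t < 2 * T ->
    is_derive period_S t (trunc_S A b0 S_cap I_cap (period_S t) (period_I t)) /\
    is_derive period_I t (trunc_I b0 k S_cap I_cap (period_S t) (period_I t)).
Proof.
  pose proof S_cap_pos. pose proof I_cap_pos.
  assert (0 < trunc_lip A b0 k S_cap I_cap) by (unfold trunc_lip; nra).
  apply (picard_solution _ _ (trunc_lip A b0 k S_cap I_cap) (trunc_bound A b0 k S_cap I_cap)); auto; try lra;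
    intros; auto using trunc_S_lipschitz, trunc_I_lipschitz, trunc_S_bounded, trunc_I_bounded.
Qed.

Lemma period_nonneg t : 0 <= t < 2 * T -> 0 <= period_S t /\ 0 <= period_I t.
Proof.
  destruct period_truncated as [HS0 [HI0 [HSc [HIc HD]]]].
  pose proof S_cap_pos. pose proof I_cap_pos. intros Ht. split.
  - refine (sign_nonneg period_S (fun s => trunc_S A b0 S_cap I_cap (period_S s) (period_I s)) 0 (2 * T)
              ltac:(lra) (fun s Hs => proj1 (HD s Hs)) (continuous_lim_right _ _ (HSc 0)) _
              ltac:(rewrite HS0; exact Hx0) t Ht).
    intros u _. exists 1, (A + S_cap + b0 * I_cap). split; [lra|]. intros s _ _. apply trunc_S_linear; lra.
  - refine (sign_nonneg period_I (fun s => trunc_I b0 k S_cap I_cap (period_S s) (period_I s)) 0 (2 * T)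
              ltac:(lra) (fun s Hs => proj2 (HD s Hs)) (continuous_lim_right _ _ (HIc 0)) _
              ltac:(rewrite HI0; exact Hy0) t Ht).
    intros u _. exists 1, (b0 * S_cap + k). split; [lra|]. intros s _ _. apply trunc_I_linear; lra.
Qed.

Lemma period_growth t : 0 <= t < 2 * T ->
  period_S t <= x0 * exp (A * t) /\ period_I t <= y0 * exp (b0 * S_cap * t).
Proof.
  destruct period_truncated as [HS0 [HI0 [HSc [HIc HD]]]].
  pose proof S_cap_pos. pose proof I_cap_pos. intros Ht.
  destruct (Req_dec t 0) as [->|Ht0]; [rewrite HS0, HI0, !Rmult_0_r, exp_0; lra|].
  rewrite <- HS0, <- HI0. replace (A * t) with (A * (t - 0)) by ring.
  replace (b0 * S_cap * t) with (b0 * S_cap * (t - 0)) by ring.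
  split.
  - apply (gronwall_le period_S (fun s => trunc_S A b0 S_cap I_cap (period_S s) (period_I s)));
      [lra|intros s Hs; apply HD; lra| |apply continuous_lim_right, HSc|apply continuous_lim_left, HSc].
    intros s Hs. apply trunc_S_growth; try lra. apply period_nonneg. lra.
  - apply (gronwall_le period_I (fun s => trunc_I b0 k S_cap I_cap (period_S s) (period_I s)));
      [lra|intros s Hs; apply HD; lra| |apply continuous_lim_right, HIc|apply continuous_lim_left, HIc].
    intros s Hs. apply trunc_I_growth; try lra. apply period_nonneg. lra.
Qed.

Lemma period_below_caps t : 0 <= t < 2 * T -> period_S t <= S_cap /\ period_I t <= I_cap.
Proof.
  intros Ht. destruct (period_growth t Ht) as [HS HI]. pose proof S_cap_pos. split.
  - assert (exp (A * t) <= exp (2 * A * T)) by (apply exp_le; nra).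
    assert (x0 * exp (A * t) <= x0 * exp (2 * A * T)) by (apply Rmult_le_compat_l; lra).
    unfold S_cap. lra.
  - assert (exp (b0 * S_cap * t) <= exp (b0 * S_cap * (2 * T)))
      by (apply exp_le, Rmult_le_compat_l; [apply Rmult_le_pos|]; lra).
    assert (y0 * exp (b0 * S_cap * t) <= y0 * exp (b0 * S_cap * (2 * T))) by (apply Rmult_le_compat_l; lra).
    unfold I_cap. lra.
Qed.

Lemma period_solution :
  period_S 0 = x0 /\ period_I 0 = y0 /\
  (forall t, continuous period_S t) /\ (forall t, continuous period_I t) /\
  (forall t, 0 < t < 2 * T ->
     is_derive period_S t (period_S t * (A - period_S t) - b0 * period_I t * period_S t) /\
     is_derive period_I t (b0 * period_I t * period_S t - k * period_I t)) /\
  (forall t, 0 <= t < 2 * T -> 0 <= period_S t /\ 0 <= period_I t).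
Proof.
  destruct period_truncated as [HS0 [HI0 [HSc [HIc HD]]]].
  do 4 (split; [assumption|]). split; [|exact period_nonneg].
  intros t Ht. destruct (HD t Ht) as [DS DI].
  destruct (period_nonneg t ltac:(lra)). destruct (period_below_caps t ltac:(lra)).
  unfold trunc_S, trunc_I in *. rewrite !clamp_id in DS, DI by lra.
  split; (eapply is_derive_eq; [eassumption|ring]).
Qed.

End OnePeriod.

Lemma Int_part_period T n t : 0 < T -> INR n * T <= t < INR n * T + T -> Int_part (t / T) = Z.of_nat n.
Proof.
  intros HT Ht. unfold Int_part. rewrite <- (tech_up (t / T) (Z.of_nat n + 1)); [ring| |];
    rewrite plus_IZR, <- INR_IZR_INZ; simpl.
  - apply (Rmult_lt_reg_r T); [exact HT|]. replace (t / T * T) with t by (field; lra). lra.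
  - apply (Rmult_le_reg_r T); [exact HT|]. replace ((t / T + 1) * T) with (t + T) by (field; lra). lra.
Qed.

Definition period_index (T t : R) : nat := Z.to_nat (Int_part (t / T)).

Lemma period_index_eq T n t : 0 < T -> INR n * T <= t < INR n * T + T -> period_index T t = n.
Proof. intros HT Ht. unfold period_index. rewrite (Int_part_period T n t HT Ht). apply Nat2Z.id. Qed.

Lemma is_derive_shift (F h : R -> R) a c t (l : R) :
  a < t < a + c -> (forall s, a < s < a + c -> F s = h (s - a)) -> is_derive h (t - a) l ->
  is_derive F t l.
Proof.
  intros Ht HF Hh. apply (is_derive_ext_loc (fun s => h (s - a))).
  - exists (mkposreal (Rmin (t - a) (a + c - t)) (Rmin_pos (t - a) (a + c - t) ltac:(lra) ltac:(lra))).
    intros s Hs. apply Rabs_lt_between' in Hs. simpl in Hs.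
    pose proof (Rmin_l (t - a) (a + c - t)). pose proof (Rmin_r (t - a) (a + c - t)).
    symmetry. apply HF. lra.
  - eapply is_derive_eq; [apply (is_derive_comp h (fun s => s - a) t l 1); [exact Hh|]|].
    + auto_derive; [exact I|ring].
    + simpl. unfold scal; simpl; unfold mult; simpl. ring.
Qed.

Lemma lim_right_shift (F h : R -> R) a c :
  0 < c -> (forall s, a <= s < a + c -> F s = h (s - a)) -> continuous h 0 ->
  filterlim F (at_right a) (locally (F a)).
Proof.
  intros Hc HF Hh. rewrite (HF a), Rminus_diag by lra.
  apply (filterlim_ext_loc (fun s => h (s - a))).
  - apply (filter_imp (fun s => a < s < a + c)); [intros s Hs; symmetry; apply HF; lra|].
    apply at_right_interval. lra.
  - apply (lim_continuous (fun s => s - a) h 0); [|exact Hh].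
    replace 0 with (a - a) by ring. lim_auto.
Qed.

Lemma lim_left_shift (F h : R -> R) a c :
  0 < c -> (forall s, a < s < a + c -> F s = h (s - a)) -> continuous h c ->
  filterlim F (at_left (a + c)) (locally (h c)).
Proof.
  intros Hc HF Hh. apply (filterlim_ext_loc (fun s => h (s - a))).
  - apply (filter_imp (fun s => a < s < a + c)); [intros s Hs; symmetry; apply HF; lra|].
    apply at_left_interval. lra.
  - apply (lim_continuous (fun s => s - a) h c); [|exact Hh].
    replace c with (a + c - a) at 2 by ring. lim_auto.
Qed.

Lemma is_sol_of_pieces A b0 sigma g p T y0 (S I : R -> R) (X Y : nat -> R -> R) :
  0 < T ->
  (forall n t, INR n * T <= t < INR n * T + T -> S t = X n (t - INR n * T) /\ I t = Y n (t - INR n * T)) ->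
  (forall n, continuous (X n) 0 /\ continuous (Y n) 0 /\ continuous (X n) T /\ continuous (Y n) T) ->
  (forall n t, 0 < t < T ->
     is_derive (X n) t (X n t * (A - X n t) - b0 * Y n t * X n t) /\
     is_derive (Y n) t (b0 * Y n t * X n t - (sigma + g) * Y n t)) ->
  (forall n, X (Datatypes.S n) 0 = (1 - p) * X n T /\ Y (Datatypes.S n) 0 = Y n T) ->
  S 0 = fst y0 -> I 0 = snd y0 ->
  is_sol A b0 sigma g p T y0 S I.
Proof.
  intros HT Hpiece Hcont Hder Hjump HS0 HI0.
  split; [exact HS0|]. split; [exact HI0|]. intros n a.
  assert (Ha : 0 <= a) by (apply Rmult_le_pos; [apply pos_INR|lra]).
  assert (HSI : forall s, a <= s < a + T -> S s = X n (s - a) /\ I s = Y n (s - a)) by exact (Hpiece n).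
  assert (Hnext : S (a + T) = X (Datatypes.S n) 0 /\ I (a + T) = Y (Datatypes.S n) 0).
  { replace 0 with (a + T - INR (Datatypes.S n) * T) by (unfold a; rewrite S_INR; ring).
    apply Hpiece. unfold a. rewrite S_INR. lra. }
  destruct (Hcont n) as [HX0 [HY0 [HXT HYT]]]. destruct (Hjump n) as [JX JY].
  split; [|split; [|split; [|split]]].
  - intros t Ht. destruct (Hder n (t - a) ltac:(lra)) as [DX DY].
    destruct (HSI t ltac:(lra)) as [-> ->].
    split; [apply (is_derive_shift S (X n) a T)|apply (is_derive_shift I (Y n) a T)];
      auto; intros s Hs; apply HSI; lra.
  - apply (lim_right_shift S (X n) a T HT); [intros s Hs; apply HSI, Hs|exact HX0].
  - apply (lim_right_shift I (Y n) a T HT); [intros s Hs; apply HSI, Hs|exact HY0].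
  - exists (X n T). split; [|rewrite (proj1 Hnext); exact JX].
    apply (lim_left_shift S (X n) a T HT); [intros s Hs; apply HSI; lra|exact HXT].
  - exists (Y n T). split; [|rewrite (proj2 Hnext); exact JY].
    apply (lim_left_shift I (Y n) a T HT); [intros s Hs; apply HSI; lra|exact HYT].
Qed.

Section Gluing.
Variables (A b0 sigma g p T : R).
Hypotheses (HA : 0 < A) (Hb0 : 0 < b0) (Hk : 0 < sigma + g) (HT : 0 < T) (Hp : 0 <= p <= 1).

Fixpoint period_start (y0 : R * R) (n : nat) : R * R :=
  match n with
  | O => y0
  | Datatypes.S m =>
      let z := period_start y0 m in
      ((1 - p) * period_S A b0 (sigma + g) T (fst z) (snd z) T, period_I A b0 (sigma + g) T (fst z) (snd z) T)
  end.

Definition piece_S y0 n := period_S A b0 (sigma + g) T (fst (period_start y0 n)) (snd (period_start y0 n)).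
Definition piece_I y0 n := period_I A b0 (sigma + g) T (fst (period_start y0 n)) (snd (period_start y0 n)).

Definition glued_S y0 t := piece_S y0 (period_index T t) (t - INR (period_index T t) * T).
Definition glued_I y0 t := piece_I y0 (period_index T t) (t - INR (period_index T t) * T).

Lemma period_start_nonneg y0 : 0 <= fst y0 -> 0 <= snd y0 ->
  forall n, 0 <= fst (period_start y0 n) /\ 0 <= snd (period_start y0 n).
Proof.
  intros H1 H2 n. induction n as [|n [IH1 IH2]]; [split; assumption|].
  destruct (period_nonneg A b0 (sigma + g) T _ _ HA Hb0 Hk HT IH1 IH2 T ltac:(lra)).
  simpl. split; [apply Rmult_le_pos; lra|assumption].
Qed.

Theorem glued_is_sol y0 : 0 <= fst y0 -> 0 <= snd y0 ->
  is_sol A b0 sigma g p T y0 (glued_S y0) (glued_I y0).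
Proof.
  intros H1 H2. pose proof (period_start_nonneg y0 H1 H2) as Hnn.
  assert (Hsol := fun n => period_solution A b0 (sigma + g) T _ _ HA Hb0 Hk HT (proj1 (Hnn n)) (proj2 (Hnn n))).
  apply (is_sol_of_pieces _ _ _ _ _ _ _ _ _ (piece_S y0) (piece_I y0) HT).
  - intros n t Ht. unfold glued_S, glued_I. rewrite (period_index_eq T n t HT Ht). split; reflexivity.
  - intros n. destruct (Hsol n) as [_ [_ [HSc [HIc _]]]]. auto.
  - intros n t Ht. destruct (Hsol n) as [_ [_ [_ [_ [HD _]]]]]. apply HD. lra.
  - intros n. destruct (Hsol (Datatypes.S n)) as [I_growth [E2 _]]. split; assumption.
  - unfold glued_S. rewrite (period_index_eq T 0 0 HT) by (simpl; lra).
    rewrite Rmult_0_l, Rminus_0_r. apply (Hsol O).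
  - unfold glued_I. rewrite (period_index_eq T 0 0 HT) by (simpl; lra).
    rewrite Rmult_0_l, Rminus_0_r. apply (Hsol O).
Qed.

End Gluing.

(** * Estimates over one period *)

Lemma locally_bounded_of_lim (c : R -> R) a b :
  (forall t, a < t < b -> continuous c t) -> filterlim c (at_right a) (locally (c a)) ->
  forall t, a <= t < b -> exists d M, 0 < d /\ forall s, t - d < s < t + d -> a < s < b -> Rabs (c s) <= M.
Proof.
  intros Hc Hr t Ht.
  assert (Hnear : forall F, filterlim c F (locally (c t)) -> F (fun s => Rabs (c s) <= Rabs (c t) + 1)).
  { intros F HF. apply (HF (fun y => Rabs y <= Rabs (c t) + 1)). exists (mkposreal 1 Rlt_0_1). intros y Hy.
    change (Rabs (y - c t) < 1) in Hy. pose proof (Rabs_triang_inv y (c t)). lra. }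
  destruct (Req_dec t a) as [->|Hta].
  - destruct (Hnear _ Hr) as [d Hd]. exists d, (Rabs (c a) + 1). split; [apply cond_pos|].
    intros s Hs Hsab. apply Hd; [apply Rabs_lt_between'; lra|lra].
  - destruct (Hnear _ (Hc t ltac:(lra))) as [d Hd]. exists d, (Rabs (c t) + 1). split; [apply cond_pos|].
    intros s Hs Hsab. apply Hd. apply Rabs_lt_between'. lra.
Qed.

Section PeriodEstimates.
Variables (A b0 k a T : R) (S I : R -> R).
Hypotheses (HA : 0 < A) (Hb0 : 0 < b0) (Hk : 0 < k) (HT : 0 < T).
Hypothesis HD : forall t, a < t < a + T ->
  is_derive S t (S t * (A - S t) - b0 * I t * S t) /\ is_derive I t (b0 * I t * S t - k * I t).
Hypothesis HrS : filterlim S (at_right a) (locally (S a)).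
Hypothesis HrI : filterlim I (at_right a) (locally (I a)).
Hypotheses (HS0 : 0 <= S a) (HI0 : 0 <= I a).

Local Notation dS := (fun s => S s * (A - S s) - b0 * I s * S s).
Local Notation dI := (fun s => b0 * I s * S s - k * I s).

Lemma S_continuous t : a < t < a + T -> continuous S t.
Proof. intros Ht. exact (is_derive_continuous _ _ _ (proj1 (HD t Ht))). Qed.

Lemma I_continuous t : a < t < a + T -> continuous I t.
Proof. intros Ht. exact (is_derive_continuous _ _ _ (proj2 (HD t Ht))). Qed.

Lemma S_local_bound t : a <= t < a + T -> exists d M, 0 < d /\
  forall s, t - d < s < t + d -> a < s < a + T ->
  Rabs (S s * (A - S s) - b0 * I s * S s) <= M * Rabs (S s).
Proof.
  intros Ht.
  destruct (locally_bounded_of_lim (fun s => A - S s - b0 * I s) a (a + T)) with (t := t)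
    as [d [M [Hd HM]]]; [| |exact Ht|].
  - intros u Hu. pose proof (S_continuous u Hu). pose proof (I_continuous u Hu). lim_auto.
  - lim_auto.
  - exists d, M. split; [exact Hd|]. intros s H1 H2.
    replace (S s * (A - S s) - b0 * I s * S s) with ((A - S s - b0 * I s) * S s) by ring.
    rewrite Rabs_mult. apply Rmult_le_compat_r; [apply Rabs_pos|exact (HM s H1 H2)].
Qed.

Lemma I_local_bound t : a <= t < a + T -> exists d M, 0 < d /\
  forall s, t - d < s < t + d -> a < s < a + T ->
  Rabs (b0 * I s * S s - k * I s) <= M * Rabs (I s).
Proof.
  intros Ht.
  destruct (locally_bounded_of_lim (fun s => b0 * S s - k) a (a + T)) with (t := t)
    as [d [M [Hd HM]]]; [| |exact Ht|].
  - intros u Hu. pose proof (S_continuous u Hu). lim_auto.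
  - lim_auto.
  - exists d, M. split; [exact Hd|]. intros s H1 H2.
    replace (b0 * I s * S s - k * I s) with ((b0 * S s - k) * I s) by ring.
    rewrite Rabs_mult. apply Rmult_le_compat_r; [apply Rabs_pos|exact (HM s H1 H2)].
Qed.

Lemma S_nonneg t : a <= t < a + T -> 0 <= S t.
Proof.
  apply (sign_nonneg S _ a (a + T) ltac:(lra) (fun t Ht => proj1 (HD t Ht)) HrS S_local_bound HS0).
Qed.

Lemma I_nonneg t : a <= t < a + T -> 0 <= I t.
Proof.
  apply (sign_nonneg I _ a (a + T) ltac:(lra) (fun t Ht => proj2 (HD t Ht)) HrI I_local_bound HI0).
Qed.

Lemma S_pos : 0 < S a -> forall t, a <= t < a + T -> 0 < S t.
Proof. apply (sign_pos S _ a (a + T) ltac:(lra) (fun t Ht => proj1 (HD t Ht)) HrS S_local_bound). Qed.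

Local Notation S_max := (S a * exp (A * T)).
Local Notation I_max := (I a * exp (b0 * S_max * T)).

Lemma S_left_lim_le t L : a < t <= a + T -> filterlim S (at_left t) (locally L) -> L <= S_max.
Proof.
  intros Ht HL.
  eapply Rle_trans;
    [apply (gronwall_le S dS A a t (S a) L); [lra|intros s Hs; apply HD; lra| |exact HrS|exact HL]|].
  - intros s Hs. pose proof (S_nonneg s ltac:(lra)). pose proof (I_nonneg s ltac:(lra)).
    assert (0 <= b0 * I s * S s) by (apply Rmult_le_pos; [apply Rmult_le_pos|]; lra). nra.
  - apply Rmult_le_compat_l; [exact HS0|]. apply exp_le. nra.
Qed.

Lemma S_le t : a <= t < a + T -> S t <= S_max.
Proof.
  intros Ht. destruct (Req_dec t a) as [->|Hta].
  - pose proof (one_le_exp (A * T) ltac:(nra)). nra.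
  - apply (S_left_lim_le t); [lra|]. apply continuous_lim_left, S_continuous. lra.
Qed.

Lemma I_left_lim_le t L : a < t <= a + T -> filterlim I (at_left t) (locally L) -> L <= I_max.
Proof.
  intros Ht HL.
  eapply Rle_trans;
    [apply (gronwall_le I dI (b0 * S_max) a t (I a) L); [lra|intros s Hs; apply HD; lra| |exact HrI|exact HL]|].
  - intros s Hs. pose proof (S_le s ltac:(lra)). pose proof (I_nonneg s ltac:(lra)).
    assert (b0 * I s * S s <= b0 * S_max * I s)
      by (assert (0 <= b0 * I s) by (apply Rmult_le_pos; lra); nra).
    assert (0 <= k * I s) by (apply Rmult_le_pos; lra). lra.
  - apply Rmult_le_compat_l; [exact HI0|]. apply exp_le.
    apply Rmult_le_compat_l; [|lra]. pose proof (exp_pos (A * T)). apply Rmult_le_pos; nra.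
Qed.

Lemma I_le t : a <= t < a + T -> I t <= I_max.
Proof.
  intros Ht. destruct (Req_dec t a) as [->|Hta].
  - pose proof (exp_pos (A * T)).
    pose proof (one_le_exp (b0 * S_max * T) ltac:(apply Rmult_le_pos; [apply Rmult_le_pos|]; nra)). nra.
  - apply (I_left_lim_le t); [lra|]. apply continuous_lim_left, I_continuous. lra.
Qed.

Lemma I_left_lim_decay L : b0 * S_max <= k / 2 -> filterlim I (at_left (a + T)) (locally L) ->
  L <= I a * exp (- (k / 2) * T).
Proof.
  intros Hsmall HL. replace (- (k / 2) * T) with (- (k / 2) * (a + T - a)) by ring.
  apply (gronwall_le I dI (- (k / 2)) a (a + T) (I a) L); [lra|apply HD| |exact HrI|exact HL].
  intros s Hs. pose proof (S_le s ltac:(lra)). pose proof (I_nonneg s ltac:(lra)).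
  assert (b0 * I s * S s <= b0 * S_max * I s)
    by (assert (0 <= b0 * I s) by (apply Rmult_le_pos; lra); nra).
  nra.
Qed.

(* S cannot decay faster than exponentially, since S' >= - (S_max + b0 I_max) S. *)
Lemma S_left_lim_ge t L : a < t <= a + T -> filterlim S (at_left t) (locally L) ->
  S a * exp (- (S_max + b0 * I_max) * T) <= L.
Proof.
  intros Ht HL.
  eapply Rle_trans; [|apply (gronwall_ge S dS (- (S_max + b0 * I_max)) a t (S a) L);
                        [lra|intros s Hs; apply HD; lra| |exact HrS|exact HL]].
  - apply Rmult_le_compat_l; [exact HS0|]. apply exp_le.
    pose proof (exp_pos (A * T)). pose proof (exp_pos (b0 * S_max * T)).
    assert (0 <= S_max + b0 * I_max) by (apply Rplus_le_le_0_compat; apply Rmult_le_pos; nra). nra.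
  - intros s Hs. pose proof (S_nonneg s ltac:(lra)). pose proof (I_nonneg s ltac:(lra)).
    pose proof (S_le s ltac:(lra)). pose proof (I_le s ltac:(lra)).
    assert (b0 * I s <= b0 * I_max) by (apply Rmult_le_compat_l; lra).
    assert (S s + b0 * I s <= S_max + b0 * I_max) by lra.
    assert (S s * (S s + b0 * I s) <= S s * (S_max + b0 * I_max)) by (apply Rmult_le_compat_l; lra).
    nra.
Qed.

Lemma S_I_max_nonneg : 0 <= S_max /\ 0 <= I_max.
Proof.
  pose proof (exp_pos (A * T)). split; [nra|].
  apply Rmult_le_pos; [exact HI0|left; apply exp_pos].
Qed.

Section PositiveStart.
Hypothesis HSpos : 0 < S a.
Variables (lS lI : R).
Hypothesis HlS : filterlim S (at_left (a + T)) (locally lS).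
Hypothesis HlI : filterlim I (at_left (a + T)) (locally lI).

Local Notation S_min := (S a * exp (- (S_max + b0 * I_max) * T)).

Lemma S_min_pos : 0 < S_min.
Proof. apply Rmult_lt_0_compat; [exact HSpos|apply exp_pos]. Qed.

Lemma S_ge t : a <= t < a + T -> S_min <= S t.
Proof.
  intros Ht. destruct (Req_dec t a) as [->|Hta].
  - destruct S_I_max_nonneg. assert (exp (- (S_max + b0 * I_max) * T) <= 1).
    { rewrite <- exp_0. apply exp_le. assert (0 <= b0 * I_max) by nra. nra. }
    nra.
  - apply (S_left_lim_ge t); [lra|]. apply continuous_lim_left, S_continuous. lra.
Qed.

Lemma lS_pos : 0 < lS.
Proof. eapply Rlt_le_trans; [apply S_min_pos|]. apply (S_left_lim_ge (a + T)); [lra|exact HlS]. Qed.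

Lemma lI_nonneg : 0 <= lI.
Proof. apply (lim_left_ge I a (a + T)); [lra| |exact HlI]. intros s Hs. apply I_nonneg. lra. Qed.

Lemma inv_S_derive t : a < t < a + T ->
  is_derive (fun u => (/ S u - / A) * exp (A * u)) t (exp (A * t) * (b0 * I t / S t)).
Proof.
  intros Ht. destruct (HD t Ht) as [DS _]. pose proof (S_pos HSpos t ltac:(lra)).
  eapply is_derive_eq.
  - apply is_derive_Rmult; [|apply is_derive_explin].
    apply (is_derive_minus (fun u => / S u) (fun _ => / A)); [apply is_derive_Rinv; [exact DS|lra]|].
    apply is_derive_const.
  - cbv beta. change (minus ?x zero) with (x - 0). field. lra.
Qed.

Lemma lim_right_inv_S : filterlim (fun u => (/ S u - / A) * exp (A * u)) (at_right a)
                          (locally ((/ S a - / A) * exp (A * a))).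
Proof. lim_auto; lra. Qed.

Lemma lim_left_inv_S : filterlim (fun u => (/ S u - / A) * exp (A * u)) (at_left (a + T))
                         (locally ((/ lS - / A) * exp (A * (a + T)))).
Proof. pose proof lS_pos. lim_auto; lra. Qed.

Lemma exp_period_start : exp (A * a) = exp (- A * T) * exp (A * (a + T)).
Proof. rewrite <- exp_plus. f_equal. ring. Qed.

Lemma inv_S_step_lower : (/ S a - / A) * exp (- A * T) <= / lS - / A.
Proof.
  assert (H : (/ S a - / A) * exp (A * a) + 0 * (a + T - a) <= (/ lS - / A) * exp (A * (a + T))).
  { apply (mvt_lower_bound _ _ a (a + T) 0 _ _ ltac:(lra) inv_S_derive);
      [|exact lim_right_inv_S|exact lim_left_inv_S].
    intros t Ht. pose proof (S_pos HSpos t ltac:(lra)). pose proof (I_nonneg t ltac:(lra)).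
    apply Rmult_le_pos; [left; apply exp_pos|]. apply Rdiv_le_0_compat; [apply Rmult_le_pos|]; lra. }
  rewrite exp_period_start in H. apply (Rmult_le_reg_r (exp (A * (a + T)))); [apply exp_pos|]. lra.
Qed.

Lemma inv_S_step_upper : / lS - / A <= (/ S a - / A) * exp (- A * T) + T * (b0 * I_max / S_min).
Proof.
  set (M := exp (A * (a + T)) * (b0 * I_max / S_min)).
  assert (H : (/ lS - / A) * exp (A * (a + T)) <= (/ S a - / A) * exp (A * a) + M * (a + T - a)).
  { apply (mvt_upper_bound _ _ a (a + T) M _ _ ltac:(lra) inv_S_derive);
      [|exact lim_right_inv_S|exact lim_left_inv_S].
    intros t Ht. pose proof (S_pos HSpos t ltac:(lra)). pose proof (I_nonneg t ltac:(lra)).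
    pose proof (I_le t ltac:(lra)). pose proof (S_ge t ltac:(lra)). pose proof S_min_pos.
    assert (exp (A * t) <= exp (A * (a + T))) by (apply exp_le; nra).
    assert (b0 * I t / S t <= b0 * I_max / S_min).
    { unfold Rdiv. apply Rmult_le_compat; [nra|left; apply Rinv_0_lt_compat; lra|nra|].
      apply Rinv_le_contravar; lra. }
    apply Rmult_le_compat; [left; apply exp_pos|apply Rdiv_le_0_compat; nra|assumption|assumption]. }
  rewrite exp_period_start in H. apply (Rmult_le_reg_r (exp (A * (a + T)))); [apply exp_pos|].
  unfold M in H. lra.
Qed.

(* Along the flow, I S^b0 exp (- (b0 A - k) t) decreases: its derivative is - b0^2 I^2 S^b0 exp (...). *)
Lemma Z_step : lI * exp (b0 * ln lS) <= exp ((b0 * A - k) * T) * (I a * exp (b0 * ln (S a))).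
Proof.
  set (c := b0 * A - k). pose proof lS_pos as HlSpos.
  assert (H : lI * exp (b0 * ln lS - c * (a + T)) <= I a * exp (b0 * ln (S a) - c * a) + 0 * (a + T - a)).
  { apply (mvt_upper_bound (fun u => I u * exp (b0 * ln (S u) - c * u))
             (fun u => - (b0 * b0) * (I u * I u) * exp (b0 * ln (S u) - c * u)) a (a + T));
      [lra| | |lim_auto; lra|lim_auto; lra].
    - intros t Ht. destruct (HD t Ht) as [DS DI]. pose proof (S_pos HSpos t ltac:(lra)).
      eapply is_derive_eq.
      + apply is_derive_Rmult; [exact DI|]. apply is_derive_Rexp.
        apply (is_derive_minus (fun u => b0 * ln (S u)) (fun u => c * u)).
        * apply (is_derive_scal (fun u => ln (S u))). apply is_derive_Rln; [exact DS|lra].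
        * auto_derive; [exact Logic.I|reflexivity].
      + cbv beta. unfold c. change (minus ?x ?y) with (x - y). change (scal ?x ?y) with (x * y). field. lra.
    - intros t Ht. pose proof (exp_pos (b0 * ln (S t) - c * t)).
      assert (0 <= b0 * b0 * (I t * I t)) by (apply Rmult_le_pos; nra). nra. }
  replace (b0 * ln lS - c * (a + T)) with (b0 * ln lS + - (c * (a + T))) in H by ring.
  replace (b0 * ln (S a) - c * a) with (b0 * ln (S a) + c * T + - (c * (a + T))) in H by ring.
  rewrite !exp_plus in H. apply (Rmult_le_reg_r (exp (- (c * (a + T))))); [apply exp_pos|]. lra.
Qed.

Lemma period_step_positive :
  0 < lS /\ 0 <= lI /\
  (/ S a - / A) * exp (- A * T) <= / lS - / A /\
  / lS - / A <= (/ S a - / A) * exp (- A * T) + T * (b0 * I_max / S_min) /\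
  lI * exp (b0 * ln lS) <= exp ((b0 * A - k) * T) * (I a * exp (b0 * ln (S a))).
Proof using HA Hb0 Hk HT HD HrS HrI HS0 HI0 HSpos HlS HlI.
  split; [exact lS_pos|]. split; [exact lI_nonneg|].
  split; [exact inv_S_step_lower|]. split; [exact inv_S_step_upper|exact Z_step].
Qed.

End PositiveStart.

Lemma period_step lS lI :
  filterlim S (at_left (a + T)) (locally lS) -> filterlim I (at_left (a + T)) (locally lI) ->
  0 <= lS <= S_max /\ 0 <= lI /\ (b0 * S_max <= k / 2 -> lI <= I a * exp (- (k / 2) * T)).
Proof using HA Hb0 Hk HT HD HrS HrI HS0 HI0.
  intros HlS HlI. split; [split|split].
  - apply (lim_left_ge S a (a + T)); [lra| |exact HlS]. intros s Hs. apply S_nonneg. lra.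
  - apply (S_left_lim_le (a + T)); [lra|exact HlS].
  - apply (lim_left_ge I a (a + T)); [lra| |exact HlI]. intros s Hs. apply I_nonneg. lra.
  - intros Hsmall. exact (I_left_lim_decay lI Hsmall HlI).
Qed.
End PeriodEstimates.

(** * Stability from exponential bounds on the stroboscopic map *)

Definition sup_dist (y x : R * R) : R := Rmax (Rabs (fst y - fst x)) (Rabs (snd y - snd x)).

Lemma ball_pair (x y : R * R) (e : posreal) :
  Rabs (fst y - fst x) < e -> Rabs (snd y - snd x) < e -> ball x e y.
Proof. intros H1 H2. split; assumption. Qed.

Lemma sup_dist_ball (x y : R * R) (e : posreal) : sup_dist y x < e -> ball x e y.
Proof. intros H. apply Rmax_Rlt in H. apply ball_pair; apply H. Qed.

Lemma locally_sup_dist (x : R * R) d : 0 < d -> locally x (fun y => sup_dist y x < d).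
Proof.
  intros Hd. exists (mkposreal d Hd). intros y [H1 H2]. apply Rmax_lub_lt; assumption.
Qed.

Lemma pow_le_one r n : 0 <= r <= 1 -> r ^ n <= 1.
Proof. intros Hr. rewrite <- (pow1 n). apply pow_incr. lra. Qed.

Lemma sup_dist_nonneg y x : 0 <= sup_dist y x.
Proof. eapply Rle_trans; [apply Rabs_pos|apply Rmax_l]. Qed.

Section ExponentialStability.
Variables (A b0 sigma g p T : R) (x0 : R * R) (d0 K r : R).
Hypotheses (Hd0 : 0 < d0) (HK : 0 <= K) (Hr : 0 <= r < 1).
Hypothesis Hbound : forall y0 S I, inD A y0 -> sup_dist y0 x0 < d0 -> is_sol A b0 sigma g p T y0 S I ->
  forall n, Rabs (S (INR n * T) - fst x0) <= K * r ^ n * sup_dist y0 x0 /\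
            Rabs (I (INR n * T) - snd x0) <= K * r ^ n * sup_dist y0 x0.

Lemma stable_of_exponential_bound : forall V : R * R -> Prop, locally x0 V ->
  exists W : R * R -> Prop, locally x0 W /\ (forall y, W y -> V y) /\
    forall y0 S I, inD A y0 -> W y0 -> is_sol A b0 sigma g p T y0 S I ->
      forall k : nat, V (S (INR k * T), I (INR k * T)).
Proof.
  intros V [eps HV].
  set (d := Rmin d0 (eps / (K + 1))).
  assert (0 < d /\ d <= d0 /\ d <= eps / (K + 1)) as [Hd [Hdd0 Hde]].
  { split; [apply Rmin_pos; [lra|apply Rdiv_lt_0_compat; [apply cond_pos|lra]]|].
    split; [apply Rmin_l|apply Rmin_r]. }
  clearbody d.
  assert (Hsmall : forall y, sup_dist y x0 < d -> sup_dist y x0 < eps /\ K * sup_dist y x0 < eps).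
  { intros y Hy. pose proof (cond_pos eps). pose proof (sup_dist_nonneg y x0).
    assert (sup_dist y x0 * (K + 1) < eps).
    { apply (Rlt_le_trans _ (eps / (K + 1) * (K + 1))); [apply Rmult_lt_compat_r; lra|].
      right. field. lra. }
    split; nra. }
  exists (fun y => sup_dist y x0 < d). split; [apply locally_sup_dist, Hd|]. split.
  - intros y Hy. apply HV, sup_dist_ball. apply Hsmall, Hy.
  - intros y0 S I HD Hy0 Hs n. destruct (Hbound y0 S I HD ltac:(lra) Hs n) as [H1 H2].
    destruct (Hsmall y0 Hy0) as [_ HKe].
    assert (K * r ^ n * sup_dist y0 x0 <= K * sup_dist y0 x0).
    { pose proof (pow_le_one r n ltac:(lra)). pose proof (pow_le r n ltac:(lra)).
      pose proof (sup_dist_nonneg y0 x0). apply Rmult_le_compat_r; [lra|]. nra. }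
    apply HV, ball_pair; simpl; lra.
Qed.

Lemma attractive_of_exponential_bound : exists V : R * R -> Prop, locally x0 V /\
  forall y0 S I, inD A y0 -> V y0 -> is_sol A b0 sigma g p T y0 S I ->
    filterlim (fun k : nat => (S (INR k * T), I (INR k * T))) eventually (locally x0).
Proof.
  exists (fun y => sup_dist y x0 < d0). split; [apply locally_sup_dist, Hd0|].
  intros y0 S I HD Hy0 Hs. apply filterlim_locally. intros eps.
  assert (Hlim : is_lim_seq (fun n => K * r ^ n * sup_dist y0 x0) 0).
  { replace (Finite 0) with (Rbar_mult (Rbar_mult K 0) (sup_dist y0 x0)) by (simpl; f_equal; ring).
    apply is_lim_seq_mult'; [|apply is_lim_seq_const].
    apply is_lim_seq_mult'; [apply is_lim_seq_const|]. apply is_lim_seq_geom. rewrite Rabs_right; lra. }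
  destruct (Hlim (fun z => Rabs z < eps)) as [N HN].
  { exists eps. intros z Hz. change (Rabs (z - 0) < eps) in Hz. rewrite Rminus_0_r in Hz. exact Hz. }
  exists N. intros n Hn. specialize (HN n Hn).
  destruct (Hbound y0 S I HD Hy0 Hs n) as [H1 H2].
  assert (0 <= K * r ^ n * sup_dist y0 x0)
    by (pose proof (sup_dist_nonneg y0 x0); pose proof (pow_le r n ltac:(lra));
        apply Rmult_le_pos; [apply Rmult_le_pos|]; lra).
  rewrite Rabs_right in HN by lra.
  apply ball_pair; simpl; lra.
Qed.

Theorem LAS_of_exponential_bound : LAS A b0 sigma g p T x0.
Proof using Hd0 HK Hr Hbound.
  split; [exact stable_of_exponential_bound|exact attractive_of_exponential_bound].
Qed.

End ExponentialStability.

Lemma is_sol_period A b0 sigma g p T y0 S I n : is_sol A b0 sigma g p T y0 S I ->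
  let a := INR n * T in
  (forall t, a < t < a + T ->
     is_derive S t (S t * (A - S t) - b0 * I t * S t) /\
     is_derive I t (b0 * I t * S t - (sigma + g) * I t)) /\
  filterlim S (at_right a) (locally (S a)) /\ filterlim I (at_right a) (locally (I a)) /\
  exists lS lI, filterlim S (at_left (a + T)) (locally lS) /\ filterlim I (at_left (a + T)) (locally lI) /\
    S (INR (Datatypes.S n) * T) = (1 - p) * lS /\ I (INR (Datatypes.S n) * T) = lI.
Proof.
  intros [_ [_ H]] a. destruct (H n) as [HD [HrS [HrI [[lS [H1 H2]] [lI [H3 H4]]]]]].
  do 3 (split; [assumption|]). exists lS, lI.
  replace (INR (Datatypes.S n) * T) with (a + T) by (unfold a; rewrite S_INR; ring). auto.
Qed.

Lemma is_sol_start A b0 sigma g p T y0 S I : is_sol A b0 sigma g p T y0 S I ->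
  S (INR 0 * T) = fst y0 /\ I (INR 0 * T) = snd y0.
Proof. intros [H1 [H2 _]]. simpl. rewrite Rmult_0_l. auto. Qed.

(** * The trivial disease-free solution *)

Section ZeroSolution.
Variables (A b0 sigma g p T : R).
Hypotheses (HA : 0 < A) (Hb0 : 0 < b0) (Hk : 0 < sigma + g) (HT : 0 < T) (Hp : 0 <= p <= 1).
Hypothesis Hrho : (1 - p) * exp (A * T) < 1.

Local Notation rho := ((1 - p) * exp (A * T)).
Local Notation q := (exp (- ((sigma + g) / 2) * T)).

Lemma zero_iterates y0 S I : is_sol A b0 sigma g p T y0 S I ->
  0 <= fst y0 -> 0 <= snd y0 -> b0 * (fst y0 * exp (A * T)) <= (sigma + g) / 2 ->
  forall n, 0 <= S (INR n * T) <= rho ^ n * fst y0 /\ 0 <= I (INR n * T) <= q ^ n * snd y0.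
Proof.
  intros Hs H1 H2 Hsmall.
  assert (Hrho0 : 0 <= rho) by (apply Rmult_le_pos; [lra|left; apply exp_pos]).
  assert (Hq : 0 < q < 1) by (split; [apply exp_pos|rewrite <- exp_0; apply exp_increasing; nra]).
  induction n as [|n [[IH1 IH2] [IH3 IH4]]].
  - destruct (is_sol_start _ _ _ _ _ _ _ _ _ Hs) as [-> ->]. simpl. lra.
  - destruct (is_sol_period _ _ _ _ _ _ _ _ _ n Hs) as [HD [HrS [HrI [lS [lI [HlS [HlI [-> ->]]]]]]]].
    destruct (period_step A b0 (sigma + g) (INR n * T) T S I HA Hb0 Hk HT HD HrS HrI IH1 IH3 lS lI HlS HlI)
      as [[HlS0 HlSle] [HlI0 Hdecay]].
    assert (rho ^ n <= 1) by (apply pow_le_one; lra).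
    assert (0 <= rho ^ n) by (apply pow_le; lra).
    simpl pow. split; split.
    + apply Rmult_le_pos; lra.
    + assert ((1 - p) * lS <= rho * S (INR n * T)) by (rewrite Rmult_assoc; apply Rmult_le_compat_l; lra).
      assert (rho * S (INR n * T) <= rho * (rho ^ n * fst y0)) by (apply Rmult_le_compat_l; lra). lra.
    + exact HlI0.
    + eapply Rle_trans; [apply Hdecay|].
      * eapply Rle_trans; [|exact Hsmall]. apply Rmult_le_compat_l; [lra|].
        apply Rmult_le_compat_r; [left; apply exp_pos|]. nra.
      * assert (I (INR n * T) * q <= q ^ n * snd y0 * q) by (apply Rmult_le_compat_r; lra). lra.
Qed.

Theorem LAS_zero : LAS A b0 sigma g p T (0, 0).
Proof.
  set (d0 := (sigma + g) / (2 * b0 * exp (A * T))).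
  assert (Hd0 : 0 < d0) by (apply Rdiv_lt_0_compat; [lra|]; pose proof (exp_pos (A * T)); nra).
  assert (Hrho0 : 0 <= rho) by (apply Rmult_le_pos; [lra|left; apply exp_pos]).
  assert (Hq : 0 < q < 1) by (split; [apply exp_pos|rewrite <- exp_0; apply exp_increasing; nra]).
  apply (LAS_of_exponential_bound _ _ _ _ _ _ _ d0 1 (Rmax rho q) Hd0 ltac:(lra)).
  { split; [eapply Rle_trans; [exact Hrho0|apply Rmax_l]|apply Rmax_lub_lt; lra]. }
  intros y0 S I [[H1 _] H2] Hy0 Hs n. unfold sup_dist in *. simpl in *. rewrite !Rminus_0_r in *.
  rewrite (Rabs_right (fst y0)), (Rabs_right (snd y0)) in * by lra.
  assert (Hsmall : b0 * (fst y0 * exp (A * T)) <= (sigma + g) / 2).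
  { pose proof (Rmax_l (fst y0) (snd y0)). pose proof (exp_pos (A * T)).
    apply (Rle_trans _ (b0 * (d0 * exp (A * T)))); [apply Rmult_le_compat_l; nra|].
    unfold d0. right. field. lra. }
  clearbody d0. destruct (zero_iterates y0 S I Hs H1 H2 Hsmall n) as [HS HI].
  assert (rho ^ n <= Rmax rho q ^ n /\ q ^ n <= Rmax rho q ^ n) as [Hr1 Hr2]
    by (split; apply pow_incr; split; try apply Rmax_l; try apply Rmax_r; lra).
  pose proof (Rmax_l (fst y0) (snd y0)). pose proof (Rmax_r (fst y0) (snd y0)).
  pose proof (pow_le rho n Hrho0). pose proof (pow_le q n ltac:(lra)).
  rewrite !Rabs_right by lra. rewrite Rmult_1_l.
  split; (eapply Rle_trans; [apply HS || apply HI|apply Rmult_le_compat; lra]).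
Qed.

End ZeroSolution.

(** * The periodic disease-free solution *)

Section PeriodicSolution.
Variables (A p T : R).
Hypotheses (HA : 0 < A) (HT : 0 < T) (Hp0 : 0 <= p) (Hp1 : exp (- A * T) < 1 - p).

Definition scal_gain := exp (A * T) * (1 - p) - 1.

(* One period of the logistic flow started at [Scal 0], the fixed point of the pulsed map. *)
Definition scal_piece u := A * scal_gain / (scal_gain + p * exp (A * (T - u))).

Lemma scal_gain_pos : 0 < scal_gain.
Proof.
  unfold scal_gain. pose proof (exp_pos (A * T)).
  assert (exp (A * T) * exp (- A * T) = 1) by (rewrite <- exp_plus, <- exp_0; f_equal; ring).
  assert (exp (A * T) * exp (- A * T) < exp (A * T) * (1 - p)) by (apply Rmult_lt_compat_l; lra).
  lra.
Qed.

Lemma scal_den_pos u : 0 < scal_gain + p * exp (A * (T - u)).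
Proof. pose proof scal_gain_pos. pose proof (exp_pos (A * (T - u))). nra. Qed.

Lemma scal_piece_derive u : is_derive scal_piece u (scal_piece u * (A - scal_piece u)).
Proof.
  pose proof (scal_den_pos u). unfold scal_piece. auto_derive; unfold Rminus in *; [lra|field; lra].
Qed.

Lemma scal_piece_continuous u : continuous scal_piece u.
Proof. exact (is_derive_continuous _ _ _ (scal_piece_derive u)). Qed.

Lemma scal_piece_jump : scal_piece 0 = (1 - p) * scal_piece T.
Proof.
  pose proof (scal_den_pos 0). pose proof (scal_den_pos T). unfold scal_piece in *.
  rewrite Rminus_0_r in *. rewrite Rminus_diag, Rmult_0_r, exp_0 in *. unfold scal_gain in *. field. lra.
Qed.

Lemma Scal_piece n t : INR n * T <= t < INR n * T + T -> Scal A p T t = scal_piece (t - INR n * T).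
Proof.
  intros Ht. unfold Scal. rewrite (Int_part_period T n t HT Ht), <- INR_IZR_INZ. reflexivity.
Qed.

Lemma Scal_0 : Scal A p T 0 = A * ((1 - p) - exp (- A * T)) / (1 - exp (- A * T)).
Proof.
  rewrite (Scal_piece 0) by (simpl; lra). simpl. rewrite Rmult_0_l, Rminus_0_r.
  unfold scal_piece, scal_gain. rewrite Rminus_0_r.
  replace (exp (- A * T)) with (/ exp (A * T)) by (rewrite <- exp_Ropp; f_equal; ring).
  assert (1 < exp (A * T)) by (rewrite <- exp_0; apply exp_increasing; nra).
  field. split; lra.
Qed.

Theorem Scal_is_sol b0 sigma g : is_sol A b0 sigma g p T (Scal A p T 0, 0) (Scal A p T) (fun _ => 0).
Proof.
  apply (is_sol_of_pieces _ _ _ _ _ _ _ _ _ (fun _ => scal_piece) (fun _ _ => 0) HT).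
  - intros n t Ht. split; [apply Scal_piece, Ht|reflexivity].
  - intros n. repeat split; auto using scal_piece_continuous, continuous_const.
  - intros n t Ht. split.
    + eapply is_derive_eq; [apply scal_piece_derive|ring].
    + eapply is_derive_eq; [apply is_derive_const|]. change (0 = b0 * 0 * scal_piece t - (sigma + g) * 0). ring.
  - intros n. split; [apply scal_piece_jump|reflexivity].
  - reflexivity.
  - reflexivity.
Qed.

End PeriodicSolution.

Section PulsedMap.
Variables (A b0 sigma g p T : R).
Local Notation k := (sigma + g).
Hypotheses (HA : 0 < A) (Hb0 : 0 < b0) (Hk : 0 < sigma + g) (HT : 0 < T) (Hp0 : 0 <= p).
Hypothesis Hp1 : exp (- A * T) < 1 - p.
Hypothesis Hp2 : (b0 * A - k) * T + b0 * ln (1 - p) < 0.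

Local Notation EA := (exp (- A * T)).
Local Notation I_max x y := (y * exp (b0 * (x * exp (A * T)) * T)).
Local Notation S_min x y := (x * exp (- (x * exp (A * T) + b0 * I_max x y) * T)).

(* In the variable [w = 1/S], the pulsed logistic map is affine with slope [lam] and fixed point [w_star]. *)
Definition lam := EA / (1 - p).
Definition w_star := (1 - EA) / (A * ((1 - p) - EA)).
Definition z_rate := exp ((b0 * A - k) * T + b0 * ln (1 - p)).
Definition mu := (1 + Rmax lam z_rate) / 2.
Definition x_hi := 2 / w_star.
Definition x_lo := 2 / (3 * w_star).
Definition I_amp := exp (b0 * (ln x_hi - ln x_lo)).
Definition I_growth := exp (b0 * (x_hi * exp (A * T)) * T).
Definition C_forcing := T * b0 * I_growth * exp ((x_hi * exp (A * T) + b0 * I_growth) * T) / x_lo.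
Definition C_err := C_forcing * I_amp / (1 - p).

Lemma EA_bounds : 0 < EA < 1.
Proof. split; [apply exp_pos|]. rewrite <- exp_0. apply exp_increasing. nra. Qed.

Lemma p_lt_1 : p < 1.
Proof. pose proof EA_bounds. lra. Qed.

Lemma lam_bounds : 0 < lam < 1.
Proof.
  pose proof EA_bounds. unfold lam. split; [apply Rdiv_lt_0_compat; lra|].
  apply (Rmult_lt_reg_r (1 - p)); [lra|]. field_simplify; lra.
Qed.

Lemma w_star_pos : 0 < w_star.
Proof. pose proof EA_bounds. unfold w_star. apply Rdiv_lt_0_compat; [lra|]. apply Rmult_lt_0_compat; lra. Qed.

Lemma z_rate_bounds : 0 < z_rate < 1.
Proof. unfold z_rate. split; [apply exp_pos|]. rewrite <- exp_0 at 2. apply exp_increasing, Hp2. Qed.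

Lemma mu_bounds : lam <= mu /\ z_rate < mu /\ mu < 1.
Proof.
  pose proof lam_bounds. pose proof z_rate_bounds. unfold mu.
  pose proof (Rmax_l lam z_rate). pose proof (Rmax_r lam z_rate).
  assert (Rmax lam z_rate < 1) by (apply Rmax_lub_lt; lra). lra.
Qed.

Lemma x_lo_pos : 0 < x_lo.
Proof. unfold x_lo. pose proof w_star_pos. apply Rdiv_lt_0_compat; lra. Qed.

Lemma x_lo_le_hi : x_lo <= x_hi.
Proof.
  unfold x_lo, x_hi. pose proof w_star_pos. apply Rmult_le_compat_l; [lra|]. apply Rinv_le_contravar; lra.
Qed.

Lemma C_err_nonneg : 0 <= C_err.
Proof.
  pose proof x_lo_pos. pose proof p_lt_1. unfold C_err, C_forcing.
  pose proof (exp_pos (b0 * (x_hi * exp (A * T)) * T)).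
  pose proof (exp_pos ((x_hi * exp (A * T) + b0 * I_growth) * T)).
  pose proof (exp_pos (b0 * (ln x_hi - ln x_lo))). fold I_growth I_amp in *.
  apply Rdiv_le_0_compat; [|lra]. apply Rmult_le_pos; [|lra]. apply Rdiv_le_0_compat; [|lra].
  repeat apply Rmult_le_pos; lra.
Qed.

Lemma error_step x l D : 0 < x -> 0 < l -> 0 <= D ->
  (/ x - / A) * EA <= / l - / A -> / l - / A <= (/ x - / A) * EA + D ->
  Rabs (/ ((1 - p) * l) - w_star) <= lam * Rabs (/ x - w_star) + D / (1 - p).
Proof.
  intros Hx Hl HD Hlo Hup. pose proof EA_bounds. pose proof p_lt_1. pose proof lam_bounds.
  set (delta := / l - / A - (/ x - / A) * EA).
  assert (E : / ((1 - p) * l) - w_star = lam * (/ x - w_star) + delta / (1 - p)).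
  { unfold delta, lam, w_star. field. repeat split; lra. }
  assert (0 <= delta <= D) by (unfold delta; lra). clearbody delta.
  rewrite E. eapply Rle_trans; [apply Rabs_triang|].
  rewrite Rabs_mult, (Rabs_right lam), Rabs_div, (Rabs_right (1 - p)), (Rabs_right delta) by lra.
  apply Rplus_le_compat_l. unfold Rdiv. apply Rmult_le_compat_r; [left; apply Rinv_0_lt_compat|]; lra.
Qed.

Lemma Zf_step x y l lI : 0 < l ->
  lI * exp (b0 * ln l) <= exp ((b0 * A - k) * T) * (y * exp (b0 * ln x)) ->
  lI * exp (b0 * ln ((1 - p) * l)) <= z_rate * (y * exp (b0 * ln x)).
Proof.
  intros Hl HZ. pose proof p_lt_1.
  rewrite ln_mult, Rmult_plus_distr_l, exp_plus by lra. unfold z_rate. rewrite exp_plus.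
  pose proof (exp_pos (b0 * ln (1 - p))).
  apply (Rmult_le_compat_r (exp (b0 * ln (1 - p)))) in HZ; [|lra]. lra.
Qed.

Lemma forcing_bound x y : x_lo <= x <= x_hi -> 0 <= y <= 1 ->
  T * (b0 * I_max x y / S_min x y) <= (1 - p) * C_err / I_amp * y.
Proof.
  intros Hx Hy. pose proof x_lo_pos. pose proof p_lt_1.
  replace ((1 - p) * C_err / I_amp) with C_forcing
    by (unfold C_err, I_amp; field; repeat split; (apply Rgt_not_eq, exp_pos || lra)).
  assert (HE : I_max x y <= y * I_growth).
  { apply Rmult_le_compat_l; [lra|]. apply exp_le. pose proof (exp_pos (A * T)).
    apply Rmult_le_compat_r; [lra|]. apply Rmult_le_compat_l; nra. }
  assert (HE1 : y * I_growth <= I_growth)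
    by (pose proof (exp_pos (b0 * (x_hi * exp (A * T)) * T)); unfold I_growth; nra).
  assert (HS : x_lo * exp (- (x_hi * exp (A * T) + b0 * I_growth) * T) <= S_min x y).
  { apply Rmult_le_compat; [lra|left; apply exp_pos|lra|]. apply exp_le.
    pose proof (exp_pos (A * T)). pose proof (exp_pos (b0 * (x * exp (A * T)) * T)).
    assert (0 <= I_max x y) by (apply Rmult_le_pos; lra).
    assert (b0 * I_max x y <= b0 * I_growth) by (apply Rmult_le_compat_l; lra).
    assert (x * exp (A * T) <= x_hi * exp (A * T)) by (apply Rmult_le_compat_r; lra). nra. }
  set (m := x_lo * exp (- (x_hi * exp (A * T) + b0 * I_growth) * T)) in *.
  assert (Hm : 0 < m) by (apply Rmult_lt_0_compat; [lra|apply exp_pos]).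
  replace C_forcing with (T * b0 * I_growth / m)
    by (unfold C_forcing, m; rewrite Ropp_mult_distr_l_reverse, exp_Ropp;
        field; repeat split; (apply Rgt_not_eq, exp_pos || lra)).
  clearbody m.
  assert (HI0 : 0 <= I_max x y) by (apply Rmult_le_pos; [lra|left; apply exp_pos]).
  assert (Hratio : I_max x y / S_min x y <= y * I_growth / m).
  { unfold Rdiv. apply Rmult_le_compat; [lra|left; apply Rinv_0_lt_compat; lra|lra|].
    apply Rinv_le_contravar; lra. }
  replace (b0 * I_max x y / S_min x y) with (b0 * (I_max x y / S_min x y))
    by (field; repeat split; apply Rgt_not_eq; first [apply exp_pos|lra]).
  apply (Rle_trans _ (T * (b0 * (y * I_growth / m)))); [|right; field; apply Rgt_not_eq; lra].
  apply Rmult_le_compat_l; [lra|]. apply Rmult_le_compat_l; [lra|exact Hratio].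
Qed.

Section Orbit.
Variables (x0 y0 : R).
Hypotheses (Hx0 : 0 < x0) (Hy0 : 0 <= y0).

(* [cc q^n] absorbs the accumulated forcing [C_err y0 q^k] of the infection into the error bound. *)
Definition cc := C_err * y0 / (mu - z_rate).
Definition P0 := Rabs (/ x0 - w_star) + cc.
Definition Zf x y := y * exp (b0 * ln x).

Hypothesis Hsm1 : P0 <= w_star / 2.
Hypothesis Hsm2 : y0 * I_amp <= 1.

Definition pulse_inv n x y := 0 < x /\ 0 <= y /\
  Rabs (/ x - w_star) + cc * z_rate ^ n <= mu ^ n * P0 /\ Zf x y <= z_rate ^ n * Zf x0 y0.

Lemma cc_nonneg : 0 <= cc.
Proof.
  unfold cc. pose proof C_err_nonneg. pose proof mu_bounds. apply Rdiv_le_0_compat; [apply Rmult_le_pos|]; lra.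
Qed.

Lemma cc_eq : C_err * y0 + cc * z_rate = cc * mu.
Proof. unfold cc. pose proof mu_bounds. field. lra. Qed.

Lemma pulse_inv_start : pulse_inv 0 x0 y0.
Proof. unfold pulse_inv, P0. simpl. lra. Qed.

Lemma pulse_inv_error n x y : pulse_inv n x y -> Rabs (/ x - w_star) <= P0.
Proof.
  intros [_ [_ [He _]]]. pose proof mu_bounds. pose proof z_rate_bounds. pose proof cc_nonneg.
  assert (mu ^ n <= 1) by (apply pow_le_one; lra).
  assert (0 <= cc * z_rate ^ n) by (apply Rmult_le_pos; [lra|apply pow_le; lra]).
  assert (0 <= P0) by (unfold P0; pose proof (Rabs_pos (/ x0 - w_star)); lra).
  assert (mu ^ n * P0 <= P0) by (rewrite <- (Rmult_1_l P0) at 2; apply Rmult_le_compat_r; lra). lra.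
Qed.

Lemma x_range_of_error x : 0 < x -> Rabs (/ x - w_star) <= w_star / 2 -> x_lo <= x <= x_hi.
Proof.
  intros Hx H. apply Rabs_le_between in H. pose proof w_star_pos. unfold x_lo, x_hi.
  split.
  - replace (2 / (3 * w_star)) with (/ (3 * w_star / 2)) by (field; lra). rewrite <- (Rinv_inv x).
    apply Rinv_le_contravar; [apply Rinv_0_lt_compat|]; lra.
  - replace (2 / w_star) with (/ (w_star / 2)) by (field; lra). rewrite <- (Rinv_inv x).
    apply Rinv_le_contravar; lra.
Qed.

Lemma pulse_inv_x n x y : pulse_inv n x y -> x_lo <= x <= x_hi.
Proof.
  intros H. apply x_range_of_error; [apply H|].
  eapply Rle_trans; [apply (pulse_inv_error n x y H)|exact Hsm1].
Qed.

Lemma pulse_inv_y n x y : pulse_inv n x y -> y <= z_rate ^ n * (y0 * I_amp).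
Proof.
  intros H. destruct (pulse_inv_x n x y H) as [X1 X2].
  destruct (pulse_inv_x 0 x0 y0 pulse_inv_start) as [X3 X4].
  destruct H as [Hx [Hy [_ HZ]]]. unfold Zf in HZ. pose proof x_lo_pos. pose proof z_rate_bounds.
  replace y with (y * exp (b0 * ln x) * exp (- (b0 * ln x)))
    by (rewrite Rmult_assoc, <- exp_plus, Rplus_opp_r, exp_0; ring).
  eapply Rle_trans; [apply Rmult_le_compat_r; [left; apply exp_pos|exact HZ]|].
  rewrite !Rmult_assoc. apply Rmult_le_compat_l; [apply pow_le; lra|].
  rewrite <- exp_plus. apply Rmult_le_compat_l; [exact Hy0|]. unfold I_amp. apply exp_le.
  assert (ln x0 <= ln x_hi) by (apply ln_le; lra). assert (ln x_lo <= ln x) by (apply ln_le; lra). nra.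
Qed.

Lemma pulse_inv_step n x y l lI : pulse_inv n x y -> 0 < l -> 0 <= lI ->
  (/ x - / A) * EA <= / l - / A ->
  / l - / A <= (/ x - / A) * EA + T * (b0 * I_max x y / S_min x y) ->
  lI * exp (b0 * ln l) <= exp ((b0 * A - k) * T) * (y * exp (b0 * ln x)) ->
  pulse_inv (Datatypes.S n) ((1 - p) * l) lI.
Proof.
  intros HI Hl HlI Hlo Hup HZ.
  pose proof (pulse_inv_x n x y HI) as Hxr. pose proof (pulse_inv_y n x y HI) as Hyb.
  destruct HI as [Hx [Hy [He HZn]]].
  pose proof p_lt_1. pose proof z_rate_bounds. pose proof mu_bounds. pose proof lam_bounds.
  pose proof cc_nonneg. pose proof C_err_nonneg. assert (HGam : 0 < I_amp) by apply exp_pos.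
  assert (Hq0 : 0 <= z_rate ^ n) by (apply pow_le; lra).
  assert (Hy1 : y <= 1) by (eapply Rle_trans; [exact Hyb|]; rewrite <- (Rmult_1_l 1);
                            apply Rmult_le_compat; [lra|nra|apply pow_le_one; lra|exact Hsm2]).
  pose proof (forcing_bound x y Hxr (conj Hy Hy1)) as HD.
  assert (HD0 : 0 <= T * (b0 * I_max x y / S_min x y)).
  { apply Rmult_le_pos; [lra|].
    apply Rdiv_le_0_compat; [apply Rmult_le_pos; [lra|apply Rmult_le_pos; [lra|left; apply exp_pos]]|].
    apply Rmult_lt_0_compat; [pose proof x_lo_pos; lra|apply exp_pos]. }
  pose proof (error_step x l _ Hx Hl HD0 Hlo Hup) as Herr.
  assert (Hforce : T * (b0 * I_max x y / S_min x y) / (1 - p) <= C_err * y0 * z_rate ^ n).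
  { apply Rle_div_l; [lra|]. eapply Rle_trans; [exact HD|].
    apply (Rle_trans _ ((1 - p) * C_err / I_amp * (z_rate ^ n * (y0 * I_amp)))).
    - apply Rmult_le_compat_l; [|exact Hyb]. apply Rdiv_le_0_compat; [apply Rmult_le_pos|]; lra.
    - right. field. lra. }
  split; [apply Rmult_lt_0_compat; lra|]. split; [exact HlI|]. split.
  - simpl pow.
    assert (lam * Rabs (/ x - w_star) <= mu * Rabs (/ x - w_star))
      by (apply Rmult_le_compat_r; [apply Rabs_pos|lra]).
    assert (mu * (Rabs (/ x - w_star) + cc * z_rate ^ n) <= mu * (mu ^ n * P0))
      by (apply Rmult_le_compat_l; lra).
    pose proof cc_eq.
    assert (C_err * y0 * z_rate ^ n + cc * (z_rate * z_rate ^ n) = mu * (cc * z_rate ^ n))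
      by (replace (mu * (cc * z_rate ^ n)) with (cc * mu * z_rate ^ n) by ring; rewrite <- cc_eq; ring).
    lra.
  - unfold Zf in *. simpl pow. eapply Rle_trans; [apply (Zf_step x y l lI Hl HZ)|].
    rewrite Rmult_assoc. apply Rmult_le_compat_l; lra.
Qed.

Lemma solution_pulse_inv S I : is_sol A b0 sigma g p T (x0, y0) S I ->
  forall n, pulse_inv n (S (INR n * T)) (I (INR n * T)).
Proof.
  intros Hs n. induction n as [|n IH].
  - destruct (is_sol_start _ _ _ _ _ _ _ _ _ Hs) as [-> ->]. exact pulse_inv_start.
  - destruct (is_sol_period _ _ _ _ _ _ _ _ _ n Hs) as [HD [HrS [HrI [lS [lI [HlS [HlI [-> ->]]]]]]]].
    pose proof IH as [Hx [Hy _]].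
    destruct (period_step_positive A b0 (sigma + g) (INR n * T) T S I HA Hb0 Hk HT HD HrS HrI
                (Rlt_le _ _ Hx) Hy Hx lS lI HlS HlI) as [HlS0 [HlI0 [Hlo [Hup HZ]]]].
    exact (pulse_inv_step n _ _ lS lI IH HlS0 HlI0 Hlo Hup HZ).
Qed.

Lemma solution_orbit_bound S I : is_sol A b0 sigma g p T (x0, y0) S I -> forall n,
  Rabs (S (INR n * T) - / w_star) <= mu ^ n * (P0 * (x_hi / w_star)) /\
  Rabs (I (INR n * T) - 0) <= mu ^ n * (I_amp * y0).
Proof.
  intros Hs n. pose proof (solution_pulse_inv S I Hs n) as HI.
  pose proof (pulse_inv_x _ _ _ HI) as [_ Hxhi]. pose proof (pulse_inv_y _ _ _ HI) as Hyb.
  destruct HI as [Hx [Hy [He _]]].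
  pose proof w_star_pos. pose proof mu_bounds. pose proof z_rate_bounds. pose proof cc_nonneg.
  assert (HGam : 0 < I_amp) by apply exp_pos.
  assert (0 <= cc * z_rate ^ n) by (apply Rmult_le_pos; [lra|apply pow_le; lra]).
  split.
  - replace (S (INR n * T) - / w_star) with ((/ S (INR n * T) - w_star) * - (S (INR n * T) / w_star))
      by (field; lra).
    rewrite Rabs_mult, Rabs_Ropp, (Rabs_right (S (INR n * T) / w_star))
      by (apply Rle_ge, Rdiv_le_0_compat; lra).
    rewrite <- Rmult_assoc. apply Rmult_le_compat; [apply Rabs_pos|apply Rdiv_le_0_compat; lra|lra|].
    apply Rmult_le_compat_r; [left; apply Rinv_0_lt_compat|]; lra.
  - rewrite Rminus_0_r, Rabs_right by lra. eapply Rle_trans; [exact Hyb|].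
    rewrite (Rmult_comm I_amp). apply Rmult_le_compat_r; [nra|]. apply pow_incr. lra.
Qed.

End Orbit.

Definition P0_const := 2 * (w_star * w_star) + C_err / (mu - z_rate).

Lemma P0_const_pos : 0 < P0_const.
Proof.
  pose proof w_star_pos. pose proof mu_bounds. pose proof C_err_nonneg. unfold P0_const.
  assert (0 <= C_err / (mu - z_rate)) by (apply Rdiv_le_0_compat; lra). nra.
Qed.

Lemma P0_le_dist x0 y0 : Rabs (x0 - / w_star) <= / w_star / 2 -> 0 <= y0 ->
  P0 x0 y0 <= P0_const * Rmax (Rabs (x0 - / w_star)) y0.
Proof.
  intros Hx Hy. pose proof w_star_pos. pose proof mu_bounds. pose proof C_err_nonneg.
  pose proof (Rmax_l (Rabs (x0 - / w_star)) y0). pose proof (Rmax_r (Rabs (x0 - / w_star)) y0).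
  assert (Hx0 : / w_star / 2 <= x0) by (apply Rabs_le_between in Hx; lra).
  assert (Hxw : 1 <= 2 * w_star * x0).
  { apply (Rmult_le_compat_l (2 * w_star)) in Hx0; [|lra]. field_simplify in Hx0; lra. }
  assert (Hinv : Rabs (/ x0 - w_star) <= 2 * (w_star * w_star) * Rabs (x0 - / w_star)).
  { replace (/ x0 - w_star) with (- (x0 - / w_star) * (w_star / x0))
      by (field; split; apply Rgt_not_eq; [nra|lra]).
    rewrite Rabs_mult, Rabs_Ropp, (Rabs_right (w_star / x0)) by (apply Rle_ge, Rdiv_le_0_compat; nra).
    rewrite Rmult_comm. apply Rmult_le_compat_r; [apply Rabs_pos|].
    apply Rle_div_l; [nra|]. nra. }
  assert (Hcc : C_err * y0 / (mu - z_rate) <= C_err / (mu - z_rate) * Rmax (Rabs (x0 - / w_star)) y0).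
  { unfold Rdiv. rewrite (Rmult_comm C_err y0), Rmult_assoc, (Rmult_comm y0).
    apply Rmult_le_compat_l; [|lra]. apply Rmult_le_pos; [lra|left; apply Rinv_0_lt_compat; lra]. }
  unfold P0, cc, P0_const. rewrite Rmult_plus_distr_r.
  apply Rplus_le_compat; [|exact Hcc].
  eapply Rle_trans; [exact Hinv|]. apply Rmult_le_compat_l; [nra|lra].
Qed.

Lemma Scal_0_w_star : Scal A p T 0 = / w_star.
Proof.
  pose proof EA_bounds. rewrite Scal_0 by (auto; lra). unfold w_star. field. split; lra.
Qed.

Definition periodic_radius := Rmin (Rmin (/ w_star / 2) (w_star / (2 * P0_const))) (/ I_amp).

Lemma periodic_radius_spec :
  0 < periodic_radius /\ periodic_radius <= / w_star / 2 /\
  periodic_radius <= w_star / (2 * P0_const) /\ periodic_radius <= / I_amp.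
Proof.
  pose proof w_star_pos. pose proof P0_const_pos. assert (0 < I_amp) by apply exp_pos.
  unfold periodic_radius. repeat split.
  - repeat apply Rmin_pos; try apply Rdiv_lt_0_compat; try apply Rinv_0_lt_compat; nra.
  - eapply Rle_trans; [apply Rmin_l|apply Rmin_l].
  - eapply Rle_trans; [apply Rmin_l|apply Rmin_r].
  - apply Rmin_r.
Qed.

Lemma periodic_orbit_estimate x0 y0 S I n : 0 <= y0 ->
  sup_dist (x0, y0) (/ w_star, 0) < periodic_radius -> is_sol A b0 sigma g p T (x0, y0) S I ->
  let K := P0_const * (x_hi / w_star) + I_amp in
  Rabs (S (INR n * T) - / w_star) <= K * mu ^ n * sup_dist (x0, y0) (/ w_star, 0) /\
  Rabs (I (INR n * T) - 0) <= K * mu ^ n * sup_dist (x0, y0) (/ w_star, 0).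
Proof.
  intros Hy0 Hdist Hs. destruct periodic_radius_spec as [Hd0 [Hd1 [Hd2 Hd3]]].
  pose proof w_star_pos. pose proof mu_bounds. pose proof z_rate_bounds. pose proof P0_const_pos.
  pose proof x_lo_pos. pose proof x_lo_le_hi. assert (HGam : 0 < I_amp) by apply exp_pos.
  unfold sup_dist in *. simpl in *. rewrite Rminus_0_r, (Rabs_right y0) in * by lra.
  set (m := Rmax (Rabs (x0 - / w_star)) y0) in *.
  assert (Hxm : Rabs (x0 - / w_star) <= m) by apply Rmax_l. assert (Hym : y0 <= m) by apply Rmax_r.
  assert (Hx : Rabs (x0 - / w_star) <= / w_star / 2) by lra.
  assert (Hx0 : 0 < x0) by (apply Rabs_le_between in Hx; pose proof (Rinv_0_lt_compat _ H); lra).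
  pose proof (P0_le_dist x0 y0 Hx Hy0) as HP0. fold m in HP0. clearbody m.
  assert (Hsm1 : P0 x0 y0 <= w_star / 2).
  { eapply Rle_trans; [exact HP0|].
    apply (Rle_trans _ (P0_const * (w_star / (2 * P0_const)))); [apply Rmult_le_compat_l; lra|].
    right. field. lra. }
  assert (Hsm2 : y0 * I_amp <= 1).
  { apply (Rle_trans _ (/ I_amp * I_amp)); [apply Rmult_le_compat_r; lra|]. right. field. lra. }
  destruct (solution_orbit_bound x0 y0 Hx0 Hy0 Hsm1 Hsm2 S I Hs n) as [B1 B2].
  assert (0 <= mu ^ n) by (apply pow_le; lra). assert (0 <= x_hi / w_star) by (apply Rdiv_le_0_compat; lra).
  assert (mu ^ n * (P0 x0 y0 * (x_hi / w_star)) <= mu ^ n * (P0_const * m * (x_hi / w_star)))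
    by (apply Rmult_le_compat_l; [lra|]; apply Rmult_le_compat_r; lra).
  assert (mu ^ n * (I_amp * y0) <= mu ^ n * (I_amp * m))
    by (apply Rmult_le_compat_l; [lra|]; apply Rmult_le_compat_l; lra).
  assert (0 <= mu ^ n * (I_amp * m)) by (apply Rmult_le_pos; [lra|]; apply Rmult_le_pos; lra).
  assert (0 <= mu ^ n * (P0_const * m * (x_hi / w_star)))
    by (apply Rmult_le_pos; [lra|]; apply Rmult_le_pos; [apply Rmult_le_pos|]; lra).
  split; lra.
Qed.

Theorem LAS_periodic : LAS A b0 sigma g p T (Scal A p T 0, 0).
Proof.
  rewrite Scal_0_w_star. pose proof w_star_pos. pose proof mu_bounds. pose proof lam_bounds.
  pose proof P0_const_pos. pose proof x_lo_pos. pose proof x_lo_le_hi. assert (0 < I_amp) by apply exp_pos.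
  assert (0 <= x_hi / w_star) by (apply Rdiv_le_0_compat; lra).
  apply (LAS_of_exponential_bound _ _ _ _ _ _ _ periodic_radius (P0_const * (x_hi / w_star) + I_amp) mu);
    [apply periodic_radius_spec|nra|lra|].
  intros [x0 y0] S I [_ Hy0] Hdist Hs n. exact (periodic_orbit_estimate x0 y0 S I n Hy0 Hdist Hs).
Qed.

End PulsedMap.

Lemma above_p1 A T p : p1 A T < p -> (1 - p) * exp (A * T) < 1.
Proof.
  unfold p1. intros Hp. pose proof (exp_pos (A * T)).
  apply (Rmult_lt_compat_r (exp (A * T))) in Hp; [|exact H].
  rewrite Rmult_minus_distr_r, <- exp_plus, Rplus_opp_l, exp_0 in Hp. lra.
Qed.

Lemma below_p1 A T p : p < p1 A T -> exp (- A * T) < 1 - p.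
Proof. unfold p1. replace (- A * T) with (- (A * T)) by ring. lra. Qed.

Lemma above_p2 A b0 sigma g T p : 0 < b0 -> p < 1 -> p2 A b0 sigma g T < p ->
  (b0 * A - (sigma + g)) * T + b0 * ln (1 - p) < 0.
Proof.
  unfold p2, Sc. intros Hb0 Hp1 Hp2.
  assert (Hln : ln (1 - p) < - ((A - (sigma + g) / b0) * T))
    by (rewrite <- (ln_exp (- ((A - (sigma + g) / b0) * T))); apply ln_increasing; lra).
  apply (Rmult_lt_compat_l b0) in Hln; [|exact Hb0].
  replace (b0 * - ((A - (sigma + g) / b0) * T)) with (- ((b0 * A - (sigma + g)) * T)) in Hln by (field; lra).
  lra.
Qed.

Theorem proposition9 (A b0 sigma g p T : R) :
  0 < A <= 1 -> 0 < b0 -> 0 <= sigma -> 0 <= g -> 0 < sigma + g ->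
  0 <= p <= 1 -> 0 < T ->
  (* well-posedness: solutions from the state space exist *)
  (forall y0, inD A y0 -> exists S I, is_sol A b0 sigma g p T y0 S I) /\
  (* (1) *)
  (p1 A T < p -> LAS A b0 sigma g p T (0, 0)) /\
  (* (2) *)
  (p2 A b0 sigma g T < p < p1 A T ->
     is_sol A b0 sigma g p T (Scal A p T 0, 0) (Scal A p T) (fun _ => 0) /\
     LAS A b0 sigma g p T (Scal A p T 0, 0)).
Proof.
  intros [HA _] Hb0 _ _ Hk Hp HT. split; [|split].
  - intros y0 [[Hx0 _] Hy0]. eexists. eexists. exact (glued_is_sol A b0 sigma g p T HA Hb0 Hk HT Hp y0 Hx0 Hy0).
  - intros Hp1. exact (LAS_zero A b0 sigma g p T HA Hb0 Hk HT Hp (above_p1 A T p Hp1)).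
  - intros [Hp2 Hp1]. apply below_p1 in Hp1.
    assert (Hp1' : p < 1) by (pose proof (exp_pos (- A * T)); lra).
    split; [exact (Scal_is_sol A p T HT (proj1 Hp) Hp1 b0 sigma g)|].
    exact (LAS_periodic A b0 sigma g p T HA Hb0 Hk HT (proj1 Hp) Hp1 (above_p2 A b0 sigma g T p Hb0 Hp1' Hp2)).
Qed.
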